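(* Let $q\in(0,1)$ and let $\ell^1(h)$ be the $L^1$-algebra associated with the little $q$-Legendre polynomials $(R_n(x;q))_{n\in\mathbb{N}_0}$. Then the linear span of the idempotents of $\ell^1(h)$ is dense in $\ell^1(h)$.
   Context: For $q\in(0,1)$, the little $q$-Legendre polynomials are defined by $R_0(x;q)=1$, $R_1(x;q)=(x-b_0)/a_0$ and $R_1(x;q)R_n(x;q)=a_nR_{n+1}(x;q)+b_nR_n(x;q)+c_nR_{n-1}(x;q)$ for $n\ge1$, where $a_0=\frac{1}{q+1}$, $b_0=\frac{q}{q+1}$, and for $n\ge1$: $a_n=q^n\frac{(1+q)(1-q^{n+1})}{(1-q^{2n+1})(1+q^{n+1})}$, $c_n=q^n\frac{(1+q)(1-q^n)}{(1-q^{2n+1})(1+q^n)}$, $b_n=1-a_n-c_n$. One has linearization formulas $R_m(x;q)R_n(x;q)=\sum_{k=|m-n|}^{m+n}g(m,n;k)R_k(x;q)$ with $g(m,n;k)\ge0$ (and $\sum_k g(m,n;k)=1$). Let $h(n)=\frac{1}{q^n}\frac{1-q^{2n+1}}{1-q}$ (equivalently $h(n)=1/g(n,n;0)$). For $f:\mathbb{N}_0\to\mathbb{C}$ and $n\in\mathbb{N}_0$ let $T_nf(m)=\sum_{k=|m-n|}^{m+n}g(m,n;k)f(k)$. The space $\ell^1(h)=\{f:\mathbb{N}_0\to\mathbb{C}:\|f\|_1=\sum_k|f(k)|h(k)<\infty\}$ with the convolution $f\ast g(n)=\sum_{k=0}^\infty T_nf(k)g(k)h(k)$ and involution given by complex conjugation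 is a commutative Banach $\ast$-algebra with unit $\delta_0$ (the $L^1$-algebra). An idempotent is $f\in\ell^1(h)$ with $f\ast f=f$. *)

From Stdlib Require Import Reals Lra ClassicalEpsilon List.
From Coquelicot Require Import Coquelicot.
Open Scope R_scope.

Definition a_coef (q : R) (n : nat) : R :=
  match n with
  | O => 1 / (q + 1)
  | S _ => q ^ n * ((1 + q) * (1 - q ^ (n + 1)))
           / ((1 - q ^ (2 * n + 1)) * (1 + q ^ (n + 1)))
  end.

Definition c_coef (q : R) (n : nat) : R :=
  match n with
  | O => 0 (* not used *)
  | S _ => q ^ n * ((1 + q) * (1 - q ^ n))
           / ((1 - q ^ (2 * n + 1)) * (1 + q ^ n))
  end.

Definition b_coef (q : R) (n : nat) : R :=
  match n with
  | O => q / (q + 1)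
  | S _ => 1 - a_coef q n - c_coef q n
  end.

Definition R1 (q x : R) : R := (x - b_coef q 0) / a_coef q 0.

(* Rpair q x n = (R_n(x;q), R_{n+1}(x;q)), using
   R_1 R_n = a_n R_{n+1} + b_n R_n + c_n R_{n-1}  (n >= 1). *)
Fixpoint Rpair (q x : R) (n : nat) : R * R :=
  match n with
  | O => (1, R1 q x)
  | S n' => let (u, v) := Rpair q x n' in
            (v, ((R1 q x - b_coef q n) * v - c_coef q n * u) / a_coef q n)
  end.

Definition Rleg (q : R) (n : nat) (x : R) : R := fst (Rpair q x n).

Definition is_lin_coeff (q : R) (m n : nat) (c : nat -> R) : Prop :=
  (forall k, (m + n < k)%nat -> c k = 0) /\
  (forall x, Rleg q m x * Rleg q n x = sum_f_R0 (fun k => c k * Rleg q k x) (m + n)).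

Definition gcoef (q : R) (m n : nat) : nat -> R :=
  epsilon (inhabits (fun _ : nat => 0)) (is_lin_coeff q m n).

Definition hw (q : R) (n : nat) : R := (1 - q ^ (2 * n + 1)) / ((1 - q) * q ^ n).

Definition Tshift (q : R) (n : nat) (f : nat -> C) (m : nat) : C :=
  sum_n_m (fun k => Cmult (RtoC (gcoef q m n k)) (f k))
          (Nat.max m n - Nat.min m n) (m + n).

Definition CSeries (u : nat -> C) : C :=
  (Series (fun k => fst (u k)), Series (fun k => snd (u k))).

Definition in_l1 (q : R) (f : nat -> C) : Prop :=
  ex_series (fun k => Cmod (f k) * hw q k).

Definition l1norm (q : R) (f : nat -> C) : R :=
  Series (fun k => Cmod (f k) * hw q k).

Definition conv (q : R) (f g : nat -> C) (n : nat) : C :=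
  CSeries (fun k => Cmult (Cmult (Tshift q n f k) (g k)) (RtoC (hw q k))).

Definition idempotent (q : R) (f : nat -> C) : Prop :=
  in_l1 q f /\ (forall n, conv q f f n = f n).

Definition lincomb (l : list (C * (nat -> C))) (n : nat) : C :=
  fold_right (fun p acc => Cplus (Cmult (fst p) (snd p n)) acc) (RtoC 0) l.

(* The little q-Legendre polynomials are orthogonal for the discrete measure with mass
   w_j = (1-q) q^j at x_j = 1 - q^j; this follows from their explicit 2phi1 form, which makes
   them eigenfunctions of a second order q-difference operator, by summation by parts.
   Consequently the character n |-> R_n(x_j) of l^1(h) is summable, and divided by
   S_j = sum_n h(n) R_n(x_j)^2 it is an idempotent; so is delta_0.  Orthogonality gives
     delta_m = h(m) delta_0 + sum_j w_j h(m) (R_m(x_j) - 1) S_j e_j        (m >= 1),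
   and summation by parts in j, combined with the Bessel inequality
   sum_n h(n) R_n(x_j)^2 <= 1/w_j and the growth of the eigenvalues, bounds the l^1(h) norm of
   the tail after J terms by a constant times q^(J/2).  Finitely supported functions are
   dense in l^1(h). *)

From Pilot Require Import Defs.
From Stdlib Require Import Reals Lra Lia List ClassicalEpsilon.
From Coquelicot Require Import Coquelicot.
Open Scope R_scope.

Ltac neq_nra := repeat split; try match goal with |- ?a <> ?b => let H := fresh in intro H; nra end.

Lemma Rabs_sub_le a b : Rabs (a - b) <= Rabs a + Rabs b.
Proof. unfold Rminus. eapply Rle_trans; [apply Rabs_triang|]. rewrite Rabs_Ropp. lra. Qed.

Lemma pow_bounds01 t n : 0 <= t <= 1 -> 0 <= t ^ n <= 1.
Proof. intros Ht. induction n; simpl; nra. Qed.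

Lemma pow_lipschitz01 t s n : 0 <= t <= 1 -> 0 <= s <= 1 ->
  Rabs (t ^ n - s ^ n) <= INR n * Rabs (t - s).
Proof.
  intros Ht Hs. induction n as [|n IH].
  - simpl. rewrite Rminus_diag, Rabs_R0. lra.
  - replace (t ^ S n - s ^ S n) with (t * (t ^ n - s ^ n) + s ^ n * (t - s)) by (simpl; ring).
    eapply Rle_trans; [apply Rabs_triang|]. rewrite !Rabs_mult.
    pose proof (pow_bounds01 s n Hs). rewrite (Rabs_right (s ^ n)), (Rabs_right t) by lra.
    rewrite S_INR. pose proof (Rabs_pos (t - s)). pose proof (Rabs_pos (t ^ n - s ^ n)). nra.
Qed.

Lemma sqrt_pow x n : 0 <= x -> sqrt (x ^ n) = sqrt x ^ n.
Proof.
  intros Hx. induction n as [|n IH]; simpl; [apply sqrt_1|].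
  rewrite sqrt_mult, IH; auto. apply pow_le; auto.
Qed.

Lemma geom_partial_le q M : 0 < q < 1 -> sum_f_R0 (fun n => q ^ n) M <= / (1 - q).
Proof.
  intros Hq. pose proof (GP_finite q M). pose proof (pow_lt q (M + 1) ltac:(lra)).
  apply (Rmult_le_reg_r (1 - q)); [lra|]. rewrite Rinv_l by lra. nra.
Qed.

Lemma sum_f_R0_scal_l c f N : sum_f_R0 (fun i => c * f i) N = c * sum_f_R0 f N.
Proof. induction N; simpl; [|rewrite IHN]; ring. Qed.

Lemma sum_f_R0_eq0 f N : (forall k, (k <= N)%nat -> f k = 0) -> sum_f_R0 f N = 0.
Proof.
  intros H. induction N; simpl; [apply H; lia|].
  rewrite IHN, (H (S N)) by (first [lia | intros; apply H; lia]). ring.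
Qed.

Lemma sum_f_R0_extend f N M : (forall k, (N < k)%nat -> f k = 0) -> (N <= M)%nat ->
  sum_f_R0 f M = sum_f_R0 f N.
Proof. intros H HM. induction HM; [reflexivity|]. simpl. rewrite IHHM, H by lia. ring. Qed.

Lemma sum_f_R0_single f N i : (forall k, k <> i -> f k = 0) ->
  sum_f_R0 f N = if Compare_dec.le_dec i N then f i else 0.
Proof.
  intros H. induction N as [|N IH]; simpl.
  - destruct (Compare_dec.le_dec i 0).
    + replace i with 0%nat by lia. reflexivity.
    + apply H. lia.
  - rewrite IH. destruct (Compare_dec.le_dec i N), (Compare_dec.le_dec i (S N)); try lia.
    + rewrite (H (S N)) by lia. ring.
    + replace i with (S N) by lia. ring.
    + rewrite H by lia. ring.
Qed.

Lemma is_lim_seq_partial_sums a : ex_series a -> is_lim_seq (fun N => sum_f_R0 a N) (Series a).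
Proof.
  intros H. apply Series_correct in H.
  eapply is_lim_seq_ext; [|exact H]. intros. apply sum_n_Reals.
Qed.

Lemma is_series_of_partial_sums a (l : R) : is_lim_seq (fun N => sum_f_R0 a N) l -> is_series a l.
Proof.
  intros H. apply (is_lim_seq_ext _ (sum_n a)) in H; [exact H|].
  intros. rewrite sum_n_Reals. reflexivity.
Qed.

Lemma Series_lin2 a b f1 f2 : ex_series f1 -> ex_series f2 ->
  Series (fun j => a * f1 j + b * f2 j) = a * Series f1 + b * Series f2.
Proof.
  intros H1 H2. rewrite Series_plus, !Series_scal_l; auto using ex_series_scal_l.
Qed.

Lemma ex_series_lin2 a b f1 f2 : ex_series f1 -> ex_series f2 ->
  ex_series (fun j => a * f1 j + b * f2 j).
Proof.
  intros H1 H2. apply (ex_series_plus (fun j => a * f1 j) (fun j => b * f2 j));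
    auto using ex_series_scal_l.
Qed.

Lemma Series_lin3 a b c f1 f2 f3 : ex_series f1 -> ex_series f2 -> ex_series f3 ->
  Series (fun j => a * f1 j + b * f2 j + c * f3 j) = a * Series f1 + b * Series f2 + c * Series f3.
Proof.
  intros H1 H2 H3.
  rewrite (Series_ext _ (fun j => 1 * (a * f1 j + b * f2 j) + c * f3 j)) by (intros; ring).
  rewrite !Series_lin2; auto using ex_series_lin2. ring.
Qed.

Lemma ex_series_geom_bound q f K : 0 < q < 1 -> (forall j, Rabs (f j) <= K * q ^ j) -> ex_series f.
Proof.
  intros Hq H. apply (ex_series_le f (fun j => K * q ^ j)); [intros; apply H|].
  apply (ex_series_scal_l K (fun j => q ^ j)), ex_series_geom. rewrite Rabs_right; lra.
Qed.

Lemma Series_sum_f_R0 (F : nat -> nat -> R) N : (forall k, ex_series (F k)) ->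
  ex_series (fun j => sum_f_R0 (fun k => F k j) N) /\
  Series (fun j => sum_f_R0 (fun k => F k j) N) = sum_f_R0 (fun k => Series (F k)) N.
Proof.
  intros H. induction N as [|N [H1 H2]]; simpl; [split; auto|]. split.
  - apply (ex_series_plus (fun j => sum_f_R0 (fun k => F k j) N) (F (S N))); auto.
  - rewrite Series_plus, H2; auto.
Qed.

Lemma Series_zero : Series (fun _ => 0) = 0.
Proof. rewrite (Series_ext _ (fun n => 0 * 1)), Series_scal_l by (intros; ring). ring. Qed.

Lemma Series_nonneg a : ex_series a -> (forall n, 0 <= a n) -> 0 <= Series a.
Proof. intros He H. rewrite <- Series_zero. apply Series_le; auto. intros; split; [lra|auto]. Qed.

Lemma sum_f_R0_le_Series a N : ex_series a -> (forall n, 0 <= a n) -> sum_f_R0 a N <= Series a.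
Proof.
  intros He H. rewrite (Series_incr_n a (S N)) by (auto; lia). simpl pred.
  enough (0 <= Series (fun k => a (S N + k)%nat)) by lra.
  apply Series_nonneg; auto. apply (ex_series_incr_n a (S N)). auto.
Qed.

Lemma term_le_Series a j : ex_series a -> (forall n, 0 <= a n) -> a j <= Series a.
Proof.
  intros He H. eapply Rle_trans; [|apply (sum_f_R0_le_Series a j); auto].
  destruct j; simpl; [lra|]. pose proof (cond_pos_sum a j H). lra.
Qed.

Lemma Series_le_of_partial_sums a B : (forall n, 0 <= a n) -> (forall N, sum_f_R0 a N <= B) ->
  ex_series a /\ Series a <= B.
Proof.
  intros Hpos HB.
  assert (Hex : ex_series a).
  { destruct (ex_finite_lim_seq_incr (fun N => sum_f_R0 a N) B) as [l Hl]; auto.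
    - intros N. simpl. pose proof (Hpos (S N)). lra.
    - exists l. apply is_series_of_partial_sums, Hl. }
  split; auto.
  assert (H : Rbar_le (Series a) B).
  { apply (is_lim_seq_le (fun N => sum_f_R0 a N) (fun _ => B)); auto.
    - apply is_lim_seq_partial_sums, Hex.
    - apply is_lim_seq_const. }
  exact H.
Qed.

Lemma lim_eq0_of_geom_bound q s (l : R) c K : 0 < q < 1 -> is_lim_seq s l ->
  (forall J, Rabs (c * s J) <= K * q ^ J) -> c * l = 0.
Proof.
  intros Hq Hs HB.
  assert (Hgeom : forall k, is_lim_seq (fun J => k * q ^ J) 0).
  { intros k. replace (Finite 0) with (Rbar_mult k 0) by (simpl; f_equal; ring).
    apply is_lim_seq_scal_l, is_lim_seq_geom. rewrite Rabs_right; lra. }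
  assert (H0 : is_lim_seq (fun J => c * s J) 0).
  { apply (is_lim_seq_le_le (fun J => - K * q ^ J) _ (fun J => K * q ^ J)); auto.
    intros J. pose proof (HB J). apply Rabs_le_between in H. lra. }
  apply is_lim_seq_unique in H0. rewrite (is_lim_seq_unique _ _ (is_lim_seq_scal_l s c l Hs)) in H0.
  injection H0. auto.
Qed.

Fixpoint psum (f : nat -> R) (J : nat) : R :=
  match J with O => 0 | S k => psum f k + f k end.

Lemma psum_S_sum_f_R0 (f : nat -> R) k : psum f (S k) = sum_f_R0 f k.
Proof. induction k; simpl in *; [ring|rewrite IHk; ring]. Qed.

Lemma psum_shift f J k : psum f (k + J) - psum f J = psum (fun i => f (i + J)%nat) k.
Proof. induction k; simpl; [ring|]. rewrite <- IHk. ring. Qed.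

Lemma psum_abs g k : Rabs (psum g k) <= psum (fun i => Rabs (g i)) k.
Proof.
  induction k; simpl; [rewrite Rabs_R0; lra|].
  eapply Rle_trans; [apply Rabs_triang|]. lra.
Qed.

Lemma psum_le f g k : (forall i, f i <= g i) -> psum f k <= psum g k.
Proof. intros H. induction k; simpl; [lra|]. pose proof (H k). lra. Qed.

Lemma psum_scal_l c f k : psum (fun i => c * f i) k = c * psum f k.
Proof. induction k; simpl; [|rewrite IHk]; ring. Qed.

Lemma psum_le_Series (f : nat -> R) k : ex_series f -> (forall n, 0 <= f n) -> psum f k <= Series f.
Proof.
  intros He Hp. destruct k; [simpl; apply Series_nonneg; auto|].
  rewrite psum_S_sum_f_R0. apply sum_f_R0_le_Series; auto.
Qed.

Lemma is_series_single (r : nat -> R) : (forall k, k <> 0%nat -> r k = 0) -> is_series r (r 0%nat).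
Proof.
  intros H. apply is_series_of_partial_sums. eapply is_lim_seq_ext; [|apply is_lim_seq_const].
  intros N. simpl. rewrite (sum_f_R0_single _ _ 0); auto.
Qed.

Lemma Series_single (r : nat -> R) : (forall k, k <> 0%nat -> r k = 0) -> Series r = r 0%nat.
Proof. intros H. apply is_series_unique, is_series_single; auto. Qed.

Lemma ex_series_single (r : nat -> R) : (forall k, k <> 0%nat -> r k = 0) -> ex_series r.
Proof. intros H. exists (r 0%nat). apply is_series_single; auto. Qed.

Lemma sum_n_m_RtoC (a : nat -> R) lo hi :
  @sum_n_m C_AbelianMonoid (fun i => RtoC (a i)) lo hi = RtoC (@sum_n_m R_AbelianMonoid a lo hi).
Proof.
  destruct (Compare_dec.le_lt_dec lo hi) as [Hle|Hlt]; [|rewrite !sum_n_m_zero by auto; reflexivity].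
  replace hi with (lo + (hi - lo))%nat by lia. generalize (hi - lo)%nat. intros k.
  induction k as [|k IH]; [rewrite Nat.add_0_r, !sum_n_n; reflexivity|].
  replace (lo + S k)%nat with (S (lo + k)) by lia.
  rewrite !sum_n_Sm, IH by lia. simpl. rewrite <- RtoC_plus. reflexivity.
Qed.

Lemma sum_n_m_vanishing_prefix (a : nat -> R) lo hi : (lo <= S hi)%nat ->
  (forall i, (i < lo)%nat -> a i = 0) -> @sum_n_m R_AbelianMonoid a lo hi = sum_f_R0 a hi.
Proof.
  intros H1 H2. rewrite <- sum_n_Reals. destruct lo as [|lo]; [reflexivity|].
  unfold sum_n. rewrite (sum_n_m_Chasles a 0 lo hi) by lia.
  replace (sum_n_m a 0 lo) with (@zero R_AbelianMonoid); [symmetry; apply plus_zero_l|].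
  change (sum_n_m a 0 lo) with (sum_n a lo). rewrite sum_n_Reals.
  symmetry. apply sum_f_R0_eq0. intros; apply H2; lia.
Qed.

Lemma CSeries_RtoC (r : nat -> R) : CSeries (fun k => RtoC (r k)) = RtoC (Series r).
Proof. unfold CSeries, RtoC. simpl. f_equal. apply Series_zero. Qed.

Lemma CSeries_ext (u v : nat -> C) : (forall k, u k = v k) -> CSeries u = CSeries v.
Proof. intros H. unfold CSeries. f_equal; apply Series_ext; intros; rewrite H; auto. Qed.

Lemma lincomb_app l1 l2 n : lincomb (l1 ++ l2) n = Cplus (lincomb l1 n) (lincomb l2 n).
Proof. induction l1 as [|p l1 IH]; simpl; [rewrite Cplus_0_l|rewrite IH; ring]; reflexivity. Qed.

Lemma lincomb_scal c l n :
  lincomb (map (fun p => (Cmult c (fst p), snd p)) l) n = Cmult c (lincomb l n).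
Proof.
  induction l as [|p l IH]; simpl; [|rewrite IH; ring].
  unfold RtoC. apply injective_projections; simpl; ring.
Qed.

(** * Polynomials given by coefficient sequences *)

Definition peval (c : nat -> R) (N : nat) (t : R) : R := sum_f_R0 (fun r => c r * t ^ r) N.

Definition shift_coef (c : nat -> R) (r : nat) : R := match r with O => 0 | S r' => c r' end.

Lemma peval_ext c d N t : (forall r, c r = d r) -> peval c N t = peval d N t.
Proof. intros H. apply sum_eq. intros; rewrite H; auto. Qed.

Lemma peval_plus c d N t : peval c N t + peval d N t = peval (fun r => c r + d r) N t.
Proof. unfold peval. rewrite <- plus_sum. apply sum_eq; intros; ring. Qed.

Lemma peval_scal k c N t : k * peval c N t = peval (fun r => k * c r) N t.
Proof. unfold peval. rewrite scal_sum. apply sum_eq; intros; ring. Qed.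

Lemma peval_minus c d N t : peval c N t - peval d N t = peval (fun r => c r - d r) N t.
Proof.
  replace (peval c N t - peval d N t) with (peval c N t + (-1) * peval d N t) by ring.
  rewrite peval_scal, peval_plus. apply peval_ext; intros; ring.
Qed.

Lemma peval_eq0 c N t : (forall r, c r = 0) -> peval c N t = 0.
Proof. intros H. apply sum_f_R0_eq0. intros; rewrite H; ring. Qed.

Lemma peval_extend c N M t : (forall r, (N < r)%nat -> c r = 0) -> (N <= M)%nat ->
  peval c M t = peval c N t.
Proof. intros H HM. apply sum_f_R0_extend; auto. intros; rewrite H; auto; ring. Qed.

Lemma peval_mulX c N t : t * peval c N t = peval (shift_coef c) (S N) t.
Proof.
  unfold peval. induction N as [|N IH]; [simpl; ring|].
  rewrite tech5, Rmult_plus_distr_l, IH, (tech5 _ (S N)). simpl. ring.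
Qed.

Lemma peval_dilate c N k t : peval c N (k * t) = peval (fun r => c r * k ^ r) N t.
Proof. apply sum_eq; intros. rewrite Rpow_mult_distr. ring. Qed.

Lemma peval_at0 c N : peval c N 0 = c 0%nat.
Proof. unfold peval. induction N as [|N IH]; simpl; [|rewrite IH]; ring. Qed.

Lemma peval_bound c N t : 0 <= t <= 1 -> Rabs (peval c N t) <= peval (fun r => Rabs (c r)) N 1.
Proof.
  intros Ht. apply (Rle_trans _ _ _ (sum_f_R0_triangle _ N)).
  apply sum_Rle. intros r _. rewrite Rabs_mult, pow1.
  pose proof (pow_bounds01 t r Ht). rewrite (Rabs_right (t ^ r)) by lra.
  pose proof (Rabs_pos (c r)). nra.
Qed.

Lemma peval_lipschitz c N t s : 0 <= t <= 1 -> 0 <= s <= 1 ->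
  Rabs (peval c N t - peval c N s) <= peval (fun r => Rabs (c r) * INR r) N 1 * Rabs (t - s).
Proof.
  intros Ht Hs. unfold peval. rewrite <- minus_sum.
  apply (Rle_trans _ _ _ (sum_f_R0_triangle _ N)). rewrite Rmult_comm, <- sum_f_R0_scal_l.
  apply sum_Rle. intros r _. rewrite pow1, Rmult_1_r.
  replace (c r * t ^ r - c r * s ^ r) with (c r * (t ^ r - s ^ r)) by ring.
  rewrite Rabs_mult. pose proof (pow_lipschitz01 t s r Ht Hs). pose proof (Rabs_pos (c r)).
  pose proof (pos_INR r). nra.
Qed.

(** * The explicit formula for the little q-Legendre polynomials *)

Section LittleQLegendre.
Variable q : R.
Hypothesis hq0 : 0 < q.
Hypothesis hq1 : q < 1.

Lemma qpow_gt0 k : 0 < q ^ k.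
Proof. apply pow_lt; lra. Qed.

Lemma qpow_le1 k : q ^ k <= 1.
Proof. pose proof (pow_bounds01 q k ltac:(lra)). lra. Qed.

Lemma qpow_lt1 k : (0 < k)%nat -> q ^ k < 1.
Proof. intros Hk. destruct k; [lia|]. simpl. pose proof (qpow_le1 k). nra. Qed.

Lemma qpow_bounds k : 0 <= q ^ k <= 1.
Proof. apply pow_bounds01. lra. Qed.

Fixpoint qpoch (a : R) (r : nat) : R :=
  match r with O => 1 | S k => qpoch a k * (1 - a * q ^ k) end.

Lemma qpochS_l a r : qpoch a (S r) = (1 - a) * qpoch (a * q) r.
Proof. induction r as [|r IH]; simpl in *; [|rewrite IH]; ring. Qed.

Lemma qpochSS a k : qpoch a (S (S k)) = (1 - a) * qpoch (a * q) k * (1 - a * q * q ^ k).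
Proof. rewrite qpochS_l. simpl. ring. Qed.

Lemma qpoch_eq0 a r s : (s < r)%nat -> a * q ^ s = 1 -> qpoch a r = 0.
Proof.
  induction r as [|r IH]; intros Hs Ha; [lia|].
  simpl. destruct (Nat.eq_dec s r) as [->|Hne]; [rewrite Ha; ring|].
  rewrite IH by (lia || exact Ha). ring.
Qed.

Lemma qpoch_q_gt0 r : 0 < qpoch q r.
Proof.
  induction r as [|r IH]; simpl; [lra|].
  pose proof (qpow_lt1 (S r) ltac:(lia)). simpl in H. apply Rmult_lt_0_compat; lra.
Qed.

(* For u = q^n this is the coefficient of t^r in R_n(1 - t), read off the terminating
   basic hypergeometric series 2phi1(q^-n, q^(n+1); q; q, q t). *)
Definition lq_coef (u : R) (r : nat) : R :=
  q ^ r * qpoch (/ u) r * qpoch (q * u) r / (qpoch q r) ^ 2.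

Lemma lq_coefS u r : u <> 0 ->
  lq_coef u (S r) = lq_coef u r * (q * (1 - q ^ r / u) * (1 - u * q ^ (S r)) / (1 - q ^ (S r)) ^ 2).
Proof.
  intros Hu. unfold lq_coef. simpl.
  pose proof (qpoch_q_gt0 r). pose proof (qpow_lt1 (S r) ltac:(lia)). simpl in H0.
  field. neq_nra.
Qed.

Lemma lq_coef_vanish n r : (n < r)%nat -> lq_coef (q ^ n) r = 0.
Proof.
  intros H. unfold lq_coef. rewrite (qpoch_eq0 (/ q ^ n) r n H); [unfold Rdiv; ring|].
  field. apply Rgt_not_eq, qpow_gt0.
Qed.

Definition a_fun (u : R) := u * (1 + q) * (1 - q * u) / ((1 - q * u ^ 2) * (1 + q * u)).
Definition c_fun (u : R) := u * (1 + q) * (1 - u) / ((1 - q * u ^ 2) * (1 + u)).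

Lemma lq_coef_recSS u k : 0 < u -> q * u ^ 2 < 1 ->
  a_fun u * lq_coef (q * u) (S (S k)) - (a_fun u + c_fun u) * lq_coef u (S (S k))
  + (1 + q) * lq_coef u (S k) + c_fun u * lq_coef (u / q) (S (S k)) = 0.
Proof.
  intros Hu Hqu. unfold lq_coef.
  pose proof (qpoch_q_gt0 k) as HQ.
  pose proof (qpow_lt1 (S k) ltac:(lia)) as Hk1. pose proof (qpow_lt1 (S (S k)) ltac:(lia)) as Hk2.
  pose proof (qpow_gt0 k) as Hv. simpl in Hk1, Hk2.
  set (X := qpoch (/ u * q) k). set (Y := qpoch (q * u * q) k). set (Qk := qpoch q k).
  set (v := q ^ k) in *.
  assert (Ha : qpoch (/ (q * u)) (S (S k)) = (1 - / (q * u)) * (1 - / u) * X).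
  { rewrite !qpochS_l. replace (/ (q * u) * q) with (/ u) by (field; lra).
    replace (/ u * q * q) with (/ (q * u) * q * q * q) by (field; lra). fold X. ring. }
  assert (Hb : qpoch (/ (u / q)) (S (S k)) = X * (1 - / u * q * v) * (1 - / u * q * (q * v))).
  { replace (/ (u / q)) with (/ u * q) by (field; lra). simpl. fold v X. ring. }
  assert (Hc : qpoch (q * (q * u)) (S (S k)) = Y * (1 - q * u * q * v) * (1 - q * u * q * (q * v))).
  { replace (q * (q * u)) with (q * u * q) by ring. simpl. fold v Y. ring. }
  assert (Hd : qpoch (q * (u / q)) (S (S k)) = (1 - u) * (1 - u * q) * Y).
  { replace (q * (u / q)) with u by (field; lra). rewrite !qpochS_l.
    replace (u * q * q) with (q * u * q) by ring. fold Y. ring. }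
  rewrite Ha, Hb, Hc, Hd, (qpochSS (/ u)), (qpochSS (q * u)), (qpochS_l (/ u)), (qpochS_l (q * u)).
  fold v X Y.
  replace (qpoch q (S (S k))) with (Qk * (1 - q * v) * (1 - q * (q * v))) by (simpl; fold v Qk; ring).
  replace (qpoch q (S k)) with (Qk * (1 - q * v)) by (simpl; fold v Qk; ring).
  replace (q ^ S (S k)) with (q * (q * v)) by reflexivity. replace (q ^ S k) with (q * v) by reflexivity.
  unfold a_fun, c_fun. field. neq_nra. apply Rgt_not_eq, HQ.
Qed.

Lemma lq_coef_rec u r : 0 < u -> q * u ^ 2 < 1 ->
  a_fun u * lq_coef (q * u) r - (a_fun u + c_fun u) * lq_coef u r
  + (1 + q) * shift_coef (lq_coef u) r + c_fun u * lq_coef (u / q) r = 0.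
Proof.
  intros Hu Hqu. destruct r as [|[|k]]; [| |apply lq_coef_recSS; auto];
    unfold lq_coef, a_fun, c_fun; simpl; field; neq_nra.
Qed.

(* Pleg n t = R_n(1 - t); the sum runs one step past the degree, where the coefficient vanishes. *)
Definition Pleg (n : nat) (t : R) : R := peval (lq_coef (q ^ n)) (S n) t.

Lemma Pleg_extend n M t : (S n <= M)%nat -> peval (lq_coef (q ^ n)) M t = Pleg n t.
Proof. intros H. apply peval_extend; auto. intros r Hr. apply lq_coef_vanish. lia. Qed.

Lemma pow_2n1 n : q ^ (2 * n + 1) = q * (q ^ n) ^ 2.
Proof. replace (2 * n + 1)%nat with (S (n + n)) by lia. simpl. rewrite pow_add. ring. Qed.

Lemma a_coefS n : a_coef q (S n) = a_fun (q ^ S n).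
Proof.
  pose proof (qpow_gt0 (S n)). pose proof (qpow_lt1 (S n) ltac:(lia)).
  unfold a_coef, a_fun. rewrite pow_2n1, pow_add. simpl (q ^ 1).
  set (u := q ^ S n) in *. field. neq_nra.
Qed.

Lemma c_coefS n : c_coef q (S n) = c_fun (q ^ S n).
Proof.
  pose proof (qpow_gt0 (S n)). pose proof (qpow_lt1 (S n) ltac:(lia)).
  unfold c_coef, c_fun. rewrite pow_2n1. set (u := q ^ S n) in *. field. neq_nra.
Qed.

Lemma PlegSS n t :
  a_coef q (S n) * Pleg (S (S n)) t =
  (1 - (1 + q) * t - b_coef q (S n)) * Pleg (S n) t - c_coef q (S n) * Pleg n t.
Proof.
  unfold b_coef. rewrite a_coefS, c_coefS.
  pose proof (qpow_gt0 (S n)). pose proof (qpow_lt1 (S n) ltac:(lia)).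
  set (u := q ^ S n) in *. set (N := S (S (S n))).
  assert (E1 : Pleg (S (S n)) t = peval (lq_coef (q * u)) N t) by reflexivity.
  assert (E2 : Pleg (S n) t = peval (lq_coef u) N t) by (symmetry; apply Pleg_extend; unfold N; lia).
  assert (E3 : t * Pleg (S n) t = peval (shift_coef (lq_coef u)) N t)
    by (unfold Pleg; rewrite peval_mulX; reflexivity).
  assert (E4 : Pleg n t = peval (lq_coef (u / q)) N t).
  { rewrite <- (Pleg_extend n N) by (unfold N; lia).
    replace (u / q) with (q ^ n) by (unfold u; simpl; field; lra). reflexivity. }
  apply Rminus_diag_uniq.
  replace ((1 - (1 + q) * t - (1 - a_fun u - c_fun u)) * Pleg (S n) t - c_fun u * Pleg n t)
    with ((a_fun u + c_fun u) * Pleg (S n) t - (1 + q) * (t * Pleg (S n) t) - c_fun u * Pleg n t)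
    by ring.
  rewrite E3, E1, E2, E4, !peval_scal, !peval_minus.
  apply peval_eq0. intros r. pose proof (lq_coef_rec u r ltac:(lra) ltac:(nra)). lra.
Qed.

(* The eigenvalue of R_n for the second order q-difference operator of [Pleg_qdiff]. *)
Definition lam (n : nat) : R := (1 - q ^ n) * (1 - q ^ (S n)) / q ^ n.

Lemma lq_coef_qdiff n r : let c := lq_coef (q ^ n) in
  lam n * shift_coef c r
  - (q * shift_coef (fun r => c r * q ^ r - c r) r - (c r * q ^ r - c r)
     - shift_coef (fun r => c r - c r * (/ q) ^ r) r + (c r - c r * (/ q) ^ r)) = 0.
Proof.
  intros c. destruct r as [|k]; [simpl; ring|].
  simpl shift_coef. unfold c. rewrite lq_coefS by (apply Rgt_not_eq, qpow_gt0).
  pose proof (qpow_gt0 n). pose proof (qpow_gt0 k). pose proof (qpow_lt1 (S k) ltac:(lia)).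
  unfold lam. rewrite !pow_inv. simpl. simpl in H1. field. neq_nra.
Qed.

Lemma Pleg_qdiff n t : lam n * t * Pleg n t =
  (q * t - 1) * (Pleg n (q * t) - Pleg n t) - (t - 1) * (Pleg n t - Pleg n (t / q)).
Proof.
  set (c := lq_coef (q ^ n)). set (N := S (S (S n))).
  assert (Hc : forall r, (S n < r)%nat -> c r = 0) by (intros; apply lq_coef_vanish; lia).
  assert (E1 : t * Pleg n t = peval (shift_coef c) N t).
  { unfold Pleg. rewrite peval_mulX. symmetry.
    apply peval_extend; [intros [|r] Hr; [lia|apply Hc; simpl; lia]|unfold N; lia]. }
  assert (E2 : Pleg n (q * t) - Pleg n t = peval (fun r => c r * q ^ r - c r) (S (S n)) t).
  { unfold Pleg. fold c. rewrite peval_dilate, peval_minus.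
    symmetry. apply peval_extend; [|lia]. intros r Hr. rewrite Hc by lia. ring. }
  assert (E3 : Pleg n t - Pleg n (t / q) = peval (fun r => c r - c r * (/ q) ^ r) (S (S n)) t).
  { unfold Pleg, Rdiv. fold c. rewrite Rmult_comm, peval_dilate, peval_minus.
    symmetry. apply peval_extend; [|lia]. intros r Hr. rewrite Hc by lia. ring. }
  replace ((q * t - 1) * (Pleg n (q * t) - Pleg n t) - (t - 1) * (Pleg n t - Pleg n (t / q)))
    with (q * (t * (Pleg n (q * t) - Pleg n t)) - (Pleg n (q * t) - Pleg n t)
          - t * (Pleg n t - Pleg n (t / q)) + (Pleg n t - Pleg n (t / q))) by ring.
  rewrite Rmult_assoc, E1, E2, E3, !peval_mulX.
  rewrite <- (peval_extend (fun r => c r * q ^ r - c r) (S (S n)) N),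
          <- (peval_extend (fun r => c r - c r * (/ q) ^ r) (S (S n)) N)
    by (lia || (intros r Hr; rewrite Hc by lia; ring)).
  apply Rminus_diag_uniq. rewrite !peval_scal, !peval_minus, !peval_plus, !peval_minus.
  apply peval_eq0. intros r. apply lq_coef_qdiff.
Qed.

Lemma Pleg0 t : Pleg 0 t = 1.
Proof. unfold Pleg, peval, lq_coef. simpl. field. lra. Qed.

Lemma Pleg1 t : Pleg 1 t = 1 - (1 + q) * t.
Proof. unfold Pleg, peval, lq_coef. simpl. field. neq_nra. Qed.

Lemma a_coef_gt0 n : 0 < a_coef q n.
Proof.
  destruct n; [simpl; apply Rdiv_lt_0_compat; lra|].
  rewrite a_coefS. pose proof (qpow_gt0 (S n)). pose proof (qpow_lt1 (S n) ltac:(lia)).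
  unfold a_fun. set (u := q ^ S n) in *. apply Rdiv_lt_0_compat; apply Rmult_lt_0_compat; nra.
Qed.

Lemma R1_E x : Defs.R1 q x = 1 - (1 + q) * (1 - x).
Proof. unfold Defs.R1. simpl. field. lra. Qed.

Lemma Rpair_Pleg x n : Rpair q x n = (Pleg n (1 - x), Pleg (S n) (1 - x)).
Proof.
  induction n as [|n IH]; [simpl; rewrite Pleg0, Pleg1, <- R1_E; reflexivity|].
  change (Rpair q x (S n)) with (let (u, v) := Rpair q x n in
    (v, ((Defs.R1 q x - b_coef q (S n)) * v - c_coef q (S n) * u) / a_coef q (S n))).
  rewrite IH. f_equal. pose proof (a_coef_gt0 (S n)).
  apply (Rmult_eq_reg_l (a_coef q (S n))); [|lra].
  rewrite PlegSS, R1_E. field. lra.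
Qed.

Lemma Rleg_Pleg n x : Rleg q n x = Pleg n (1 - x).
Proof. unfold Rleg. rewrite Rpair_Pleg. reflexivity. Qed.

Lemma Pleg_rec n t : (1 <= n)%nat ->
  (1 - (1 + q) * t) * Pleg n t =
  a_coef q n * Pleg (S n) t + b_coef q n * Pleg n t + c_coef q n * Pleg (pred n) t.
Proof. intros Hn. destruct n; [lia|]. simpl pred. rewrite PlegSS. ring. Qed.

Definition Pleg_bnd (n : nat) : R := peval (fun r => Rabs (lq_coef (q ^ n) r)) (S n) 1.
Definition Pleg_lip (n : nat) : R := peval (fun r => Rabs (lq_coef (q ^ n) r) * INR r) (S n) 1.

Lemma Pleg_bound n t : 0 <= t <= 1 -> Rabs (Pleg n t) <= Pleg_bnd n.
Proof. apply peval_bound. Qed.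

Lemma Pleg_lipschitz n t s : 0 <= t <= 1 -> 0 <= s <= 1 ->
  Rabs (Pleg n t - Pleg n s) <= Pleg_lip n * Rabs (t - s).
Proof. apply peval_lipschitz. Qed.

Lemma Pleg_bnd_ge0 n : 0 <= Pleg_bnd n.
Proof. eapply Rle_trans; [apply Rabs_pos|]. apply (Pleg_bound n 0). lra. Qed.

Lemma Pleg_lip_ge0 n : 0 <= Pleg_lip n.
Proof.
  apply cond_pos_sum. intros r. rewrite pow1.
  pose proof (Rabs_pos (lq_coef (q ^ n) r)). pose proof (pos_INR r). nra.
Qed.

(** * Orthogonality on the mass points [1 - q^j] *)

(* The orthogonality measure of the R_n puts mass [w j] at [1 - q^j]; [y n j] is R_n there. *)
Definition w (j : nat) : R := (1 - q) * q ^ j.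
Definition y (n j : nat) : R := Pleg n (q ^ j).
Definition flux (n j : nat) : R := (q ^ S j - 1) * (y n (S j) - y n j).

Lemma w_gt0 j : 0 < w j.
Proof. apply Rmult_lt_0_compat; [lra|apply qpow_gt0]. Qed.

Lemma y_Rleg n j : y n j = Rleg q n (1 - q ^ j).
Proof. unfold y. rewrite Rleg_Pleg. f_equal. ring. Qed.

Lemma y0 j : y 0 j = 1.
Proof. apply Pleg0. Qed.

Lemma y_bound n j : Rabs (y n j) <= Pleg_bnd n.
Proof. apply Pleg_bound, qpow_bounds. Qed.

Lemma y_at0 n j : Rabs (y n j - 1) <= Pleg_lip n * q ^ j.
Proof.
  replace 1 with (Pleg n 0) by (unfold Pleg; rewrite peval_at0; unfold lq_coef; simpl; field).
  eapply Rle_trans; [apply Pleg_lipschitz; [apply qpow_bounds|lra]|].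
  rewrite Rminus_0_r, Rabs_right by (apply Rle_ge, pow_le; lra). lra.
Qed.

Lemma y_diff n j : Rabs (y n (S j) - y n j) <= Pleg_lip n * q ^ j.
Proof.
  eapply Rle_trans; [apply Pleg_lipschitz; apply qpow_bounds|].
  apply Rmult_le_compat_l; [apply Pleg_lip_ge0|].
  pose proof (qpow_gt0 j). simpl. rewrite Rabs_left1; nra.
Qed.

Lemma flux_bound n j : Rabs (flux n j) <= Pleg_lip n * q ^ j.
Proof.
  unfold flux. rewrite Rabs_mult.
  assert (Rabs (q ^ S j - 1) <= 1) by (pose proof (qpow_bounds (S j)); rewrite Rabs_left1; lra).
  pose proof (y_diff n j). pose proof (Rabs_pos (y n (S j) - y n j)). pose proof (Rabs_pos (q ^ S j - 1)).
  nra.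
Qed.

Lemma flux_bound_abs n j : Rabs (flux n j) <= Rabs (y n (S j)) + Rabs (y n j).
Proof.
  unfold flux. rewrite Rabs_mult.
  assert (Rabs (q ^ S j - 1) <= 1) by (pose proof (qpow_bounds (S j)); rewrite Rabs_left1; lra).
  pose proof (Rabs_pos (q ^ S j - 1)). pose proof (Rabs_sub_le (y n (S j)) (y n j)).
  pose proof (Rabs_pos (y n (S j) - y n j)). nra.
Qed.

(* The q-difference equation at the mass points, in divergence form. *)
Lemma lam_w_y n j : lam n * (w j * y n j) =
  (1 - q) * (flux n j - match j with O => 0 | S j' => flux n j' end).
Proof.
  pose proof (Pleg_qdiff n (q ^ j)) as H. unfold w, flux, y.
  destruct j as [|j']; simpl in H |- *.
  - replace (lam n * ((1 - q) * 1 * Pleg n 1)) with ((1 - q) * (lam n * 1 * Pleg n 1)) by ring.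
    rewrite H. simpl. ring.
  - replace (q * q ^ j' / q) with (q ^ j') in H by (field; lra).
    replace (lam n * ((1 - q) * (q * q ^ j') * Pleg n (q * q ^ j')))
      with ((1 - q) * (lam n * (q * q ^ j') * Pleg n (q * q ^ j'))) by ring.
    rewrite H. ring.
Qed.

Lemma lam_sum_by_parts (z : nat -> R) n K :
  lam n * sum_f_R0 (fun j => w j * z j * y n j) K =
  (1 - q) * (z K * flux n K - psum (fun j => flux n j * (z (S j) - z j)) K).
Proof.
  induction K as [|K IH]; simpl.
  - pose proof (lam_w_y n 0) as H. simpl in H.
    replace (lam n * (w 0 * z 0%nat * y n 0)) with (z 0%nat * (lam n * (w 0 * y n 0))) by ring.
    rewrite H. ring.
  - rewrite Rmult_plus_distr_l, IH.
    replace (lam n * (w (S K) * z (S K) * y n (S K))) with (z (S K) * (lam n * (w (S K) * y n (S K))))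
      by ring.
    rewrite lam_w_y. ring.
Qed.

Lemma ex_series_wyy m n : ex_series (fun j => w j * y m j * y n j).
Proof.
  apply (ex_series_geom_bound q _ ((1 - q) * Pleg_bnd m * Pleg_bnd n)); [lra|].
  intros j. unfold w. rewrite !Rabs_mult, (Rabs_right (1 - q)), (Rabs_right (q ^ j))
    by (apply Rle_ge; (lra || apply pow_le; lra)).
  pose proof (y_bound m j). pose proof (y_bound n j). pose proof (Rabs_pos (y m j)).
  pose proof (Rabs_pos (y n j)). pose proof (qpow_gt0 j). pose proof (Pleg_bnd_ge0 m).
  assert (0 <= (1 - q) * q ^ j) by nra.
  replace ((1 - q) * Pleg_bnd m * Pleg_bnd n * q ^ j) with ((1 - q) * q ^ j * (Pleg_bnd m * Pleg_bnd n))
    by ring.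
  rewrite !Rmult_assoc. apply Rmult_le_compat_l; [lra|]. apply Rmult_le_compat_l; [nra|].
  apply Rmult_le_compat; auto.
Qed.

Definition ip (m n : nat) : R := Series (fun j => w j * y m j * y n j).

Lemma lam_lt_S n : lam n < lam (S n).
Proof.
  unfold lam. pose proof (qpow_gt0 n). pose proof (qpow_le1 n).
  simpl. set (v := q ^ n) in *. apply Rlt_0_minus.
  replace ((1 - q * v) * (1 - q * (q * v)) / (q * v) - (1 - v) * (1 - q * v) / v)
    with ((1 - q * v) * (1 - q) * (1 + q * v) / (q * v)) by (field; neq_nra).
  apply Rdiv_lt_0_compat; [|nra]. apply Rmult_lt_0_compat; [|nra]. apply Rmult_lt_0_compat; nra.
Qed.

Lemma lam_increasing m n : (m < n)%nat -> lam m < lam n.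
Proof. intros H. induction H; [apply lam_lt_S|]. eapply Rlt_trans; [exact IHle|apply lam_lt_S]. Qed.

(* Summation by parts twice shows (lam n - lam m) ip m n is a limit of O(q^J) boundary terms. *)
Lemma ip_orth m n : m <> n -> ip m n = 0.
Proof.
  intros Hmn.
  assert (Hl : lam n - lam m <> 0).
  { destruct (Nat.lt_gt_cases m n) as [[H|H] _]; auto;
      [pose proof (lam_increasing m n H)|pose proof (lam_increasing n m H)]; lra. }
  apply (Rmult_eq_reg_l (lam n - lam m)); auto. rewrite Rmult_0_r.
  apply (lim_eq0_of_geom_bound q (fun J => sum_f_R0 (fun j => w j * y m j * y n j) J) _ _
    ((1 - q) * (Pleg_bnd m * Pleg_lip n + Pleg_bnd n * Pleg_lip m)));
    [lra|apply is_lim_seq_partial_sums, ex_series_wyy|].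
  intros J.
  rewrite Rmult_minus_distr_r, lam_sum_by_parts.
  rewrite (sum_eq _ (fun j => w j * y n j * y m j)) by (intros; ring).
  rewrite lam_sum_by_parts.
  replace (psum (fun j => flux m j * (y n (S j) - y n j)) J)
    with (psum (fun j => flux n j * (y m (S j) - y m j)) J)
    by (clear; induction J; simpl; auto; rewrite IHJ; unfold flux; f_equal; ring).
  match goal with |- Rabs ?e <= _ =>
    replace e with ((1 - q) * (y m J * flux n J - y n J * flux m J)) by ring end.
  rewrite Rabs_mult, (Rabs_right (1 - q)), Rmult_assoc by lra.
  apply Rmult_le_compat_l; [lra|].
  eapply Rle_trans; [apply Rabs_sub_le|]. rewrite !Rabs_mult.
  pose proof (y_bound m J). pose proof (y_bound n J). pose proof (flux_bound n J).
  pose proof (flux_bound m J). pose proof (Rabs_pos (y m J)). pose proof (Rabs_pos (y n J)).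
  pose proof (Rabs_pos (flux n J)). pose proof (Rabs_pos (flux m J)).
  pose proof (Pleg_bnd_ge0 m). pose proof (Pleg_bnd_ge0 n).
  apply (Rle_trans _ (Pleg_bnd m * (Pleg_lip n * q ^ J) + Pleg_bnd n * (Pleg_lip m * q ^ J)));
    [apply Rplus_le_compat; apply Rmult_le_compat; auto|right; ring].
Qed.

Lemma hw_E n : hw q n = (1 - q * (q ^ n) ^ 2) / ((1 - q) * q ^ n).
Proof. unfold hw. rewrite pow_2n1. reflexivity. Qed.

Lemma hw_gt0 n : 0 < hw q n.
Proof.
  rewrite hw_E. pose proof (qpow_gt0 n). pose proof (qpow_le1 n). set (u := q ^ n) in *.
  apply Rdiv_lt_0_compat; [|apply Rmult_lt_0_compat; lra]. simpl.
  assert (u * u <= 1) by nra. nra.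
Qed.

Lemma hw0 : hw q 0 = 1.
Proof. unfold hw. simpl. field. lra. Qed.

Lemma hw_c_coef1 : hw q 1 * c_coef q 1 = 1.
Proof. rewrite hw_E. unfold c_coef. simpl. field. neq_nra. Qed.

Lemma hw_c_coefS n : (1 <= n)%nat -> hw q (S n) * c_coef q (S n) = hw q n * a_coef q n.
Proof.
  intros Hn. destruct n as [|k]; [lia|].
  rewrite c_coefS, a_coefS, !hw_E. pose proof (qpow_gt0 (S k)). pose proof (qpow_lt1 (S k) ltac:(lia)).
  change (q ^ S (S k)) with (q * q ^ S k). set (u := q ^ S k) in *.
  assert (u * u <= 1) by nra. assert (q * u * (q * u) <= 1) by nra.
  unfold a_fun, c_fun. simpl. field. neq_nra.
Qed.

Lemma Series_w_comb3 a b c A B C D :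
  Series (fun j => w j * (a * y A j + b * y B j + c * y C j) * y D j)
  = a * ip A D + b * ip B D + c * ip C D.
Proof.
  rewrite (Series_ext _ (fun j => a * (w j * y A j * y D j) + b * (w j * y B j * y D j)
     + c * (w j * y C j * y D j))) by (intros; ring).
  apply Series_lin3; apply ex_series_wyy.
Qed.

(* Pair the recurrence relation at n and at n+1 with the orthogonality relations. *)
Lemma ip_diag_rec n : (1 <= n)%nat -> a_coef q n * ip (S n) (S n) = c_coef q (S n) * ip n n.
Proof.
  intros Hn. set (F := fun j => w j * ((1 - (1 + q) * q ^ j) * y n j) * y (S n) j).
  transitivity (Series F).
  - unfold F. rewrite (Series_ext _ (fun j => w j * (a_coef q n * y (S n) j + b_coef q n * y n j
      + c_coef q n * y (pred n) j) * y (S n) j)) by (intros; unfold y; rewrite Pleg_rec; auto).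
    rewrite Series_w_comb3, (ip_orth n (S n)), (ip_orth (pred n) (S n)) by lia. ring.
  - unfold F. rewrite (Series_ext _ (fun j => w j * (a_coef q (S n) * y (S (S n)) j
      + b_coef q (S n) * y (S n) j + c_coef q (S n) * y n j) * y n j)).
    + rewrite Series_w_comb3, (ip_orth (S (S n)) n), (ip_orth (S n) n) by lia. ring.
    + intros j. pose proof (Pleg_rec (S n) (q ^ j) ltac:(lia)) as H. simpl pred in H.
      unfold y. rewrite <- H. ring.
Qed.

Lemma ip00 : ip 0 0 = 1.
Proof.
  unfold ip. rewrite (Series_ext _ (fun j => (1 - q) * q ^ j)) by (intros; rewrite y0; unfold w; ring).
  rewrite Series_scal_l, Series_geom by (rewrite Rabs_right; lra). field. lra.
Qed.

Lemma ip11 : ip 1 1 = c_coef q 1.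
Proof.
  transitivity (c_coef q 1 * ip 0 0); [|rewrite ip00; ring].
  unfold ip at 1. rewrite (Series_ext _ (fun j => w j * (a_coef q 1 * y 2 j + b_coef q 1 * y 1 j
    + c_coef q 1 * y 0 j) * y 0 j)).
  - rewrite Series_w_comb3, (ip_orth 2 0), (ip_orth 1 0) by lia. ring.
  - intros j. pose proof (Pleg_rec 1 (q ^ j) ltac:(lia)) as H. simpl pred in H.
    unfold y. rewrite <- H, Pleg0, Pleg1. ring.
Qed.

Lemma ip_diag n : ip n n = / hw q n.
Proof.
  induction n as [|[|n] IH].
  - rewrite ip00, hw0. field.
  - rewrite ip11. pose proof hw_c_coef1. pose proof (hw_gt0 1).
    apply (Rmult_eq_reg_l (hw q 1)); [|lra]. rewrite Rinv_r; lra.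
  - pose proof (ip_diag_rec (S n) ltac:(lia)) as H. pose proof (hw_c_coefS (S n) ltac:(lia)).
    pose proof (a_coef_gt0 (S n)). pose proof (hw_gt0 (S n)). pose proof (hw_gt0 (S (S n))).
    rewrite IH in H. apply (Rmult_eq_reg_l (a_coef q (S n))); [|lra]. rewrite H.
    replace (c_coef q (S (S n))) with (hw q (S n) * a_coef q (S n) / hw q (S (S n)))
      by (rewrite <- H0; field; lra).
    field. lra.
Qed.

Lemma ip_E m n : ip m n = if Nat.eq_dec m n then / hw q n else 0.
Proof. destruct (Nat.eq_dec m n); [subst; apply ip_diag|apply ip_orth; auto]. Qed.

(** * Linearization coefficients *)

Definition in_Rspan (N : nat) (F : R -> R) : Prop :=
  exists c : nat -> R, (forall k, (N < k)%nat -> c k = 0) /\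
    forall x, F x = sum_f_R0 (fun k => c k * Rleg q k x) N.

Lemma in_Rspan_ext N F G : (forall x, F x = G x) -> in_Rspan N F -> in_Rspan N G.
Proof. intros H [c [H1 H2]]. exists c; split; auto. intros; rewrite <- H; auto. Qed.

Lemma in_Rspan_mono N M F : (N <= M)%nat -> in_Rspan N F -> in_Rspan M F.
Proof.
  intros HM [c [H1 H2]]. exists c. split; [intros; apply H1; lia|].
  intros x. rewrite H2. symmetry. apply sum_f_R0_extend; auto. intros; rewrite H1; auto; ring.
Qed.

Lemma in_Rspan_lin N a b F G :
  in_Rspan N F -> in_Rspan N G -> in_Rspan N (fun x => a * F x + b * G x).
Proof.
  intros [c [H1 H2]] [d [H3 H4]]. exists (fun k => a * c k + b * d k). split.
  - intros. rewrite H1, H3 by auto. ring.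
  - intros x. rewrite H2, H4, !scal_sum, <- plus_sum. apply sum_eq. intros; ring.
Qed.

Lemma in_Rspan_lin3 N a b c F G H : in_Rspan N F -> in_Rspan N G -> in_Rspan N H ->
  in_Rspan N (fun x => a * F x + b * G x + c * H x).
Proof.
  intros HF HG HH. apply (in_Rspan_ext _ (fun x => 1 * (a * F x + b * G x) + c * H x));
    [intros; ring|]. apply in_Rspan_lin; auto. apply in_Rspan_lin; auto.
Qed.

Lemma in_Rspan_Rleg N k : (k <= N)%nat -> in_Rspan N (Rleg q k).
Proof.
  intros Hk. apply (in_Rspan_mono k); auto.
  exists (fun i => if Nat.eq_dec i k then 1 else 0). split.
  - intros i Hi. destruct (Nat.eq_dec i k); [lia|auto].
  - intros x. rewrite (sum_f_R0_single _ k k).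
    + destruct (Compare_dec.le_dec k k), (Nat.eq_dec k k); try lia. ring.
    + intros i Hi. destruct (Nat.eq_dec i k); [lia|ring].
Qed.

Lemma in_Rspan_sum M N (c : nat -> R) (G : nat -> R -> R) : (forall k, (k <= N)%nat -> in_Rspan M (G k)) ->
  in_Rspan M (fun x => sum_f_R0 (fun k => c k * G k x) N).
Proof.
  intros H. induction N as [|N IH]; simpl.
  - apply (in_Rspan_ext _ (fun x => c 0%nat * G 0%nat x + 0 * G 0%nat x)); [intros; ring|].
    apply in_Rspan_lin; apply H; lia.
  - apply (in_Rspan_ext _ (fun x => 1 * sum_f_R0 (fun k => c k * G k x) N + c (S N) * G (S N) x));
      [intros; ring|].
    apply in_Rspan_lin; [apply IH; intros|]; apply H; lia.
Qed.

Lemma Rleg_rec k x : (1 <= k)%nat -> Defs.R1 q x * Rleg q k x =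
  a_coef q k * Rleg q (S k) x + b_coef q k * Rleg q k x + c_coef q k * Rleg q (pred k) x.
Proof. intros Hk. rewrite !Rleg_Pleg, R1_E. apply Pleg_rec; auto. Qed.

Lemma in_Rspan_R1_Rleg k : in_Rspan (S k) (fun x => Defs.R1 q x * Rleg q k x).
Proof.
  destruct k as [|k].
  - apply (in_Rspan_ext _ (Rleg q 1)); [|apply in_Rspan_Rleg; lia].
    intros x. rewrite !Rleg_Pleg, Pleg0, Pleg1, R1_E. ring.
  - apply (in_Rspan_ext _ (fun x => a_coef q (S k) * Rleg q (S (S k)) x
      + b_coef q (S k) * Rleg q (S k) x + c_coef q (S k) * Rleg q k x)).
    + intros x. rewrite Rleg_rec by lia. reflexivity.
    + apply in_Rspan_lin3; apply in_Rspan_Rleg; lia.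
Qed.

Lemma in_Rspan_R1 N F : in_Rspan N F -> in_Rspan (S N) (fun x => Defs.R1 q x * F x).
Proof.
  intros [c [H1 H2]].
  apply (in_Rspan_ext _ (fun x => sum_f_R0 (fun k => c k * (Defs.R1 q x * Rleg q k x)) N)).
  - intros x. rewrite H2, scal_sum. apply sum_eq; intros; ring.
  - apply (in_Rspan_sum _ _ c (fun k x => Defs.R1 q x * Rleg q k x)).
    intros k Hk. apply (in_Rspan_mono (S k)); [lia|apply in_Rspan_R1_Rleg].
Qed.

Lemma in_Rspan_prod m n : in_Rspan (m + n) (fun x => Rleg q m x * Rleg q n x).
Proof.
  enough (H : forall m, (forall n, in_Rspan (m + n) (fun x => Rleg q m x * Rleg q n x)) /\
    (forall n, in_Rspan (S m + n) (fun x => Rleg q (S m) x * Rleg q n x))) by apply H.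
  clear m n. intros m. induction m as [|m [IH1 IH2]].
  - split; intros n.
    + apply (in_Rspan_ext _ (Rleg q n)); [|apply in_Rspan_Rleg; lia].
      intros x. rewrite (Rleg_Pleg 0), Pleg0. ring.
    + apply (in_Rspan_ext _ (fun x => Defs.R1 q x * Rleg q n x)); [|apply in_Rspan_R1, in_Rspan_Rleg; lia].
      intros x. rewrite !Rleg_Pleg, Pleg1, R1_E. ring.
  - split; auto. intros n.
    set (a := a_coef q (S m)). set (b := b_coef q (S m)). set (c := c_coef q (S m)).
    assert (Ha : 0 < a) by apply a_coef_gt0.
    apply (in_Rspan_ext _ (fun x => / a * (Defs.R1 q x * (Rleg q (S m) x * Rleg q n x))
      + (- b / a) * (Rleg q (S m) x * Rleg q n x) + (- c / a) * (Rleg q m x * Rleg q n x))).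
    + intros x. pose proof (Rleg_rec (S m) x ltac:(lia)) as Hr. simpl pred in Hr. fold a b c in Hr.
      replace (Rleg q (S (S m)) x) with ((Defs.R1 q x * Rleg q (S m) x - b * Rleg q (S m) x
        - c * Rleg q m x) / a) by (rewrite Hr; field; lra).
      field. lra.
    + apply in_Rspan_lin3.
      * replace (S (S m) + n)%nat with (S (S m + n)) by lia. apply in_Rspan_R1, IH2.
      * apply (in_Rspan_mono (S m + n)); [lia|apply IH2].
      * apply (in_Rspan_mono (m + n)); [lia|apply IH1].
Qed.

Lemma gcoef_spec m n : is_lin_coeff q m n (gcoef q m n).
Proof. unfold gcoef. apply epsilon_spec. destruct (in_Rspan_prod m n) as [c Hc]. exists c. exact Hc. Qed.

Lemma lin_coeff_y m n c j : is_lin_coeff q m n c ->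
  y m j * y n j = sum_f_R0 (fun k => c k * y k j) (m + n).
Proof. intros [_ H]. rewrite !y_Rleg, H. apply sum_eq. intros. rewrite y_Rleg. reflexivity. Qed.

Lemma lin_coeff_ip m n d c : is_lin_coeff q m n c ->
  c d * ip d d = Series (fun j => w j * y m j * y n j * y d j).
Proof.
  intros H.
  rewrite (Series_ext _ (fun j => sum_f_R0 (fun k => c k * (w j * y k j * y d j)) (m + n))).
  2: { intros j. replace (w j * y m j * y n j * y d j) with ((w j * y d j) * (y m j * y n j)) by ring.
       rewrite (lin_coeff_y m n c j H), scal_sum. apply sum_eq. intros. ring. }
  destruct (Series_sum_f_R0 (fun k j => c k * (w j * y k j * y d j)) (m + n)) as [_ ->].
  { intros k. apply (ex_series_scal_l (c k) (fun j => w j * y k j * y d j)), ex_series_wyy. }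
  rewrite (sum_f_R0_single _ _ d).
  - destruct (Compare_dec.le_dec d (m + n)); [rewrite Series_scal_l; reflexivity|].
    destruct H as [H1 _]. rewrite H1 by lia. ring.
  - intros k Hk. rewrite Series_scal_l. fold (ip k d). rewrite ip_orth by auto. ring.
Qed.

Lemma ip_diag_gt0 d : 0 < ip d d.
Proof. rewrite ip_diag. apply Rinv_0_lt_compat, hw_gt0. Qed.

(* g(m,n;i) ip(i,i) = <R_m R_n, R_i> = g(m,i;n) ip(n,n), and g(m,i;n) = 0 when n > m + i. *)
Lemma lin_coeff_vanish m n c i : is_lin_coeff q m n c ->
  ((i + m < n)%nat \/ (i + n < m)%nat) -> c i = 0.
Proof.
  intros H Hi. pose proof (ip_diag_gt0 i).
  apply (Rmult_eq_reg_r (ip i i)); [|lra]. rewrite Rmult_0_l, (lin_coeff_ip m n i c H).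
  destruct Hi as [Hi|Hi].
  - rewrite (Series_ext _ (fun j => w j * y m j * y i j * y n j)) by (intros; ring).
    rewrite <- (lin_coeff_ip m i n _ (gcoef_spec m i)).
    destruct (gcoef_spec m i) as [H1 _]. rewrite H1 by lia. ring.
  - rewrite (Series_ext _ (fun j => w j * y n j * y i j * y m j)) by (intros; ring).
    rewrite <- (lin_coeff_ip n i m _ (gcoef_spec n i)).
    destruct (gcoef_spec n i) as [H1 _]. rewrite H1 by lia. ring.
Qed.

Lemma gcoef_0nn n : gcoef q 0 n n = 1.
Proof.
  pose proof (ip_diag_gt0 n). apply (Rmult_eq_reg_r (ip n n)); [|lra].
  rewrite (lin_coeff_ip 0 n n _ (gcoef_spec 0 n)), Rmult_1_l. unfold ip.
  apply Series_ext. intros. rewrite y0. ring.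
Qed.

(** * A Bessel inequality and summability of the characters *)

Definition ycomb (b : nat -> R) (M i : nat) : R := sum_f_R0 (fun n => b n * y n i) M.

Lemma Series_w_y_ycomb g M n :
  ex_series (fun i => w i * y n i * ycomb g M i) /\
  Series (fun i => w i * y n i * ycomb g M i) = if Compare_dec.le_dec n M then g n * ip n n else 0.
Proof.
  destruct (Series_sum_f_R0 (fun m i => g m * (w i * y n i * y m i)) M) as [H1 H2].
  { intros m. apply (ex_series_scal_l (g m) (fun i => w i * y n i * y m i)), ex_series_wyy. }
  assert (E : forall i, w i * y n i * ycomb g M i = sum_f_R0 (fun m => g m * (w i * y n i * y m i)) M).
  { intros i. unfold ycomb. rewrite scal_sum. apply sum_eq. intros; ring. }
  split; [eapply ex_series_ext; [|exact H1]; intros; rewrite E; auto|].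
  rewrite (Series_ext _ _ E), H2, (sum_f_R0_single _ _ n).
  - destruct (Compare_dec.le_dec n M); [|auto]. rewrite Series_scal_l. reflexivity.
  - intros m Hm. rewrite Series_scal_l. fold (ip n m). rewrite ip_orth by auto. ring.
Qed.

Lemma Series_w_ycomb2 b M :
  ex_series (fun i => w i * ycomb b M i * ycomb b M i) /\
  Series (fun i => w i * ycomb b M i * ycomb b M i) = sum_f_R0 (fun n => b n * b n * ip n n) M.
Proof.
  destruct (Series_sum_f_R0 (fun n i => b n * (w i * y n i * ycomb b M i)) M) as [H1 H2].
  { intros n. apply (ex_series_scal_l (b n) (fun i => w i * y n i * ycomb b M i)), Series_w_y_ycomb. }
  assert (E : forall i, w i * ycomb b M i * ycomb b M i
                        = sum_f_R0 (fun n => b n * (w i * y n i * ycomb b M i)) M).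
  { intros i. transitivity ((w i * ycomb b M i) * sum_f_R0 (fun n => b n * y n i) M);
      [unfold ycomb at 1; ring|].
    rewrite <- sum_f_R0_scal_l. apply sum_eq. intros; ring. }
  split; [eapply ex_series_ext; [|exact H1]; intros; rewrite E; auto|].
  rewrite (Series_ext _ _ E), H2. apply sum_eq. intros n Hn.
  rewrite Series_scal_l, (proj2 (Series_w_y_ycomb b M n)).
  destruct (Compare_dec.le_dec n M); [ring|lia].
Qed.

(* Evaluate the norm of the combination with coefficients h(n) y n j at its own mass point j. *)
Lemma bessel_y j M : sum_f_R0 (fun n => hw q n * y n j ^ 2) M <= / w j.
Proof.
  set (A := sum_f_R0 (fun n => hw q n * y n j ^ 2) M).
  set (b := fun n => hw q n * y n j).
  pose proof (w_gt0 j) as Hw.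
  assert (HA : 0 <= A) by (apply cond_pos_sum; intros k; pose proof (hw_gt0 k);
    pose proof (pow2_ge_0 (y k j)); nra).
  assert (Hv : ycomb b M j = A) by (apply sum_eq; intros; unfold b; simpl; ring).
  destruct (Series_w_ycomb2 b M) as [Hex Hs].
  assert (HsA : Series (fun i => w i * ycomb b M i * ycomb b M i) = A).
  { rewrite Hs. apply sum_eq. intros n _. unfold b. rewrite ip_diag.
    pose proof (hw_gt0 n). field. lra. }
  assert (Hle : w j * A * A <= A).
  { rewrite <- Hv at 1 2. rewrite <- HsA.
    apply (term_le_Series (fun i => w i * ycomb b M i * ycomb b M i)); auto.
    intros n. pose proof (w_gt0 n). rewrite Rmult_assoc. apply Rmult_le_pos; [lra|apply Rle_0_sqr]. }
  destruct (Req_dec A 0) as [H0|H0]; [rewrite H0; apply Rlt_le, Rinv_0_lt_compat; auto|].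
  apply (Rmult_le_reg_l (w j)); auto. rewrite Rinv_r by lra.
  apply (Rmult_le_reg_r A); nra.
Qed.

(* h(n) / lam n, set to 0 at n = 0 where lam vanishes. *)
Definition hw_lam (n : nat) : R := match n with O => 0 | S _ => hw q n / lam n end.
Definition hw_lam2 (n : nat) : R := match n with O => 0 | S _ => hw q n / lam n ^ 2 end.

Lemma hw_lam_bounds n : (1 <= n)%nat ->
  0 < lam n /\ hw q n / lam n <= / (1 - q) ^ 3 /\ hw q n / lam n ^ 2 <= q ^ n / (1 - q) ^ 5.
Proof.
  intros Hn. rewrite hw_E. unfold lam.
  pose proof (qpow_gt0 n). pose proof (qpow_lt1 n ltac:(lia)).
  assert (q ^ n <= q) by (destruct n; [lia|]; simpl; pose proof (qpow_le1 n); nra).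
  simpl (q ^ S n). set (u := q ^ n) in *.
  assert (Hl : (1 - q) ^ 2 / u <= (1 - u) * (1 - q * u) / u).
  { apply Rmult_le_compat_r; [left; apply Rinv_0_lt_compat; auto|]. simpl.
    rewrite Rmult_1_r. apply Rmult_le_compat; nra. }
  assert (0 < (1 - q) ^ 2 / u) by (apply Rdiv_lt_0_compat; [simpl; nra|auto]).
  assert (Hh : (1 - q * u ^ 2) / ((1 - q) * u) <= / ((1 - q) * u)).
  { unfold Rdiv. rewrite <- (Rmult_1_l (/ ((1 - q) * u))) at 2.
    apply Rmult_le_compat_r; [left; apply Rinv_0_lt_compat; nra|simpl; nra]. }
  assert (0 <= (1 - q * u ^ 2) / ((1 - q) * u)) by (apply Rdiv_le_0_compat; simpl; nra).
  set (L := (1 - u) * (1 - q * u) / u) in *. set (Hu := (1 - q * u ^ 2) / ((1 - q) * u)) in *.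
  split; [lra|split].
  - apply (Rle_trans _ (/ ((1 - q) * u) / ((1 - q) ^ 2 / u))); [|right; field; neq_nra].
    unfold Rdiv. apply Rmult_le_compat; auto; [left; apply Rinv_0_lt_compat; lra|].
    apply Rinv_le_contravar; auto.
  - apply (Rle_trans _ (/ ((1 - q) * u) / ((1 - q) ^ 2 / u) ^ 2)); [|right; field; neq_nra].
    unfold Rdiv. apply Rmult_le_compat; auto; [left; apply Rinv_0_lt_compat; simpl; nra|].
    apply Rinv_le_contravar; simpl; nra.
Qed.

Lemma sum_hw_lam2_le M : sum_f_R0 hw_lam2 M <= / (1 - q) ^ 6.
Proof.
  assert (Hc : 0 < / (1 - q) ^ 5) by (apply Rinv_0_lt_compat, pow_lt; lra).
  apply (Rle_trans _ (sum_f_R0 (fun n => / (1 - q) ^ 5 * q ^ n) M)).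
  - apply sum_Rle. intros [|n] _; [cbn [hw_lam2]; rewrite pow_O; lra|].
    destruct (hw_lam_bounds (S n) ltac:(lia)) as [_ [_ H]]. rewrite Rmult_comm. exact H.
  - rewrite sum_f_R0_scal_l. pose proof (geom_partial_le q M ltac:(lra)).
    apply (Rle_trans _ (/ (1 - q) ^ 5 * / (1 - q))); [apply Rmult_le_compat_l; [lra|exact H]|].
    right. simpl. field. lra.
Qed.

Lemma hw_lam_y_amgm n eps t : 0 < eps ->
  hw_lam n * Rabs t <= (eps * (hw q n * t ^ 2) + hw_lam2 n / eps) / 2.
Proof.
  intros He. pose proof (hw_gt0 n) as Hh. destruct n as [|n].
  - cbn [hw_lam hw_lam2]. unfold Rdiv. rewrite !Rmult_0_l.
    assert (0 <= hw q 0 * t ^ 2) by (apply Rmult_le_pos; [lra|apply pow2_ge_0]). nra.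
  - unfold hw_lam, hw_lam2. destruct (hw_lam_bounds (S n) ltac:(lia)) as [Hl _].
    set (L := lam (S n)) in *. set (h := hw q (S n)) in *.
    assert (Hk : 2 * Rabs t / L <= eps * t ^ 2 + / (L ^ 2 * eps)).
    { assert (0 <= (eps * Rabs t - / L) ^ 2 / eps) by (apply Rdiv_le_0_compat; [apply pow2_ge_0|auto]).
      replace (eps * t ^ 2 + / (L ^ 2 * eps)) with (2 * Rabs t / L + (eps * Rabs t - / L) ^ 2 / eps);
        [lra|rewrite <- (pow2_abs t); field; neq_nra]. }
    replace (h / L * Rabs t) with (h * (2 * Rabs t / L) / 2) by (field; neq_nra).
    replace ((eps * (h * t ^ 2) + h / L ^ 2 / eps) / 2) with (h * (eps * t ^ 2 + / (L ^ 2 * eps)) / 2)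
      by (field; neq_nra).
    apply Rmult_le_compat_r; [lra|]. apply Rmult_le_compat_l; lra.
Qed.

Definition K_amgm : R := (1 + / (1 - q) ^ 6) / 2.

Lemma K_amgm_gt0 : 0 < K_amgm.
Proof. unfold K_amgm. pose proof (Rinv_0_lt_compat ((1 - q) ^ 6) (pow_lt (1 - q) 6 ltac:(lra))). lra. Qed.

(* AM-GM with weight sqrt (w i), then Bessel and the geometric decay of h/lam^2. *)
Lemma sum_hw_lam_y_le i M : sum_f_R0 (fun n => hw_lam n * Rabs (y n i)) M <= K_amgm / sqrt (w i).
Proof.
  pose proof (w_gt0 i) as Hw. set (s := sqrt (w i)).
  assert (Hs : 0 < s) by (apply sqrt_lt_R0; auto).
  assert (Hss : s * s = w i) by (apply sqrt_sqrt; lra).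
  apply (Rle_trans _ (sum_f_R0 (fun n => (s * (hw q n * y n i ^ 2) + hw_lam2 n / s) / 2) M));
    [apply sum_Rle; intros; apply hw_lam_y_amgm; auto|].
  replace (sum_f_R0 (fun n => (s * (hw q n * y n i ^ 2) + hw_lam2 n / s) / 2) M)
    with ((s * sum_f_R0 (fun n => hw q n * y n i ^ 2) M + sum_f_R0 hw_lam2 M / s) / 2)
    by (induction M; [simpl|rewrite !tech5, <- IHM]; field; lra).
  pose proof (bessel_y i M). pose proof (sum_hw_lam2_le M).
  apply (Rle_trans _ ((s * / w i + / (1 - q) ^ 6 / s) / 2));
    [|right; unfold K_amgm; rewrite <- Hss; field; lra].
  apply Rmult_le_compat_r; [lra|]. apply Rplus_le_compat; [apply Rmult_le_compat_l; lra|].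
  unfold Rdiv. apply Rmult_le_compat_r; [left; apply Rinv_0_lt_compat|]; auto.
Qed.

Lemma lam_y_bound n j : Rabs (lam n * y n j) <=
  / q ^ j * (Rabs (y n (S j)) + 2 * Rabs (y n j) + Rabs (y n (pred j))).
Proof.
  pose proof (qpow_gt0 j) as Hj.
  assert (E : lam n * y n j = / q ^ j * (flux n j - match j with O => 0 | S j' => flux n j' end)).
  { apply (Rmult_eq_reg_l ((1 - q) * q ^ j)); [|neq_nra].
    replace ((1 - q) * q ^ j * (lam n * y n j)) with (lam n * (w j * y n j)) by (unfold w; ring).
    rewrite lam_w_y. field. lra. }
  rewrite E, Rabs_mult, Rabs_right by (apply Rle_ge; left; apply Rinv_0_lt_compat; auto).
  apply Rmult_le_compat_l; [left; apply Rinv_0_lt_compat; auto|].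
  eapply Rle_trans; [apply Rabs_sub_le|]. pose proof (flux_bound_abs n j).
  destruct j as [|j']; simpl pred.
  - rewrite Rabs_R0. pose proof (Rabs_pos (y n 0)). lra.
  - pose proof (flux_bound_abs n j'). lra.
Qed.

Lemma hw_y_le n j : hw q n * Rabs (y n j) <= (if Nat.eq_dec n 0 then 1 else 0) +
  / q ^ j * (hw_lam n * Rabs (y n (S j)) + 2 * (hw_lam n * Rabs (y n j)) + hw_lam n * Rabs (y n (pred j))).
Proof.
  destruct n as [|n]; [simpl; rewrite y0, hw0, Rabs_R1; lra|].
  destruct (Nat.eq_dec (S n) 0); [lia|].
  destruct (hw_lam_bounds (S n) ltac:(lia)) as [Hl _]. pose proof (hw_gt0 (S n)).
  unfold hw_lam. set (L := lam (S n)) in *.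
  replace (hw q (S n) * Rabs (y (S n) j)) with (hw q (S n) / L * Rabs (L * y (S n) j))
    by (rewrite Rabs_mult, (Rabs_right L) by lra; field; lra).
  apply (Rle_trans _ (hw q (S n) / L * (/ q ^ j * (Rabs (y (S n) (S j)) + 2 * Rabs (y (S n) j)
    + Rabs (y (S n) (pred j)))))); [|right; ring].
  apply Rmult_le_compat_l; [left; apply Rdiv_lt_0_compat; lra|apply lam_y_bound].
Qed.

Lemma ex_series_y_hw j : ex_series (fun n => Rabs (y n j) * hw q n).
Proof.
  set (isq := fun i => / sqrt (w i)).
  set (B := 1 + / q ^ j * (K_amgm * isq (S j) + 2 * (K_amgm * isq j) + K_amgm * isq (pred j))).
  apply (Series_le_of_partial_sums _ B
    (fun n => Rmult_le_pos _ _ (Rabs_pos _) (Rlt_le _ _ (hw_gt0 n)))).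
  intros M.
  apply (Rle_trans _ (sum_f_R0 (fun n => (if Nat.eq_dec n 0 then 1 else 0) + / q ^ j *
    (hw_lam n * Rabs (y n (S j)) + 2 * (hw_lam n * Rabs (y n j)) + hw_lam n * Rabs (y n (pred j)))) M));
    [apply sum_Rle; intros; rewrite Rmult_comm; apply hw_y_le|].
  rewrite plus_sum. unfold B. apply Rplus_le_compat.
  - rewrite (sum_f_R0_single _ _ 0); [destruct (Compare_dec.le_dec 0 M); simpl; lra|].
    intros k Hk. destruct (Nat.eq_dec k 0); [lia|auto].
  - rewrite sum_f_R0_scal_l. apply Rmult_le_compat_l; [left; apply Rinv_0_lt_compat, qpow_gt0|].
    rewrite !plus_sum, sum_f_R0_scal_l.
    pose proof (sum_hw_lam_y_le (S j) M). pose proof (sum_hw_lam_y_le j M).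
    pose proof (sum_hw_lam_y_le (pred j) M). unfold isq, Rdiv in *. lra.
Qed.

(** * Idempotents *)

Lemma Tshift_RtoC n (v : nat -> R) k : Tshift q n (fun i => RtoC (v i)) k =
  RtoC (@sum_n_m R_AbelianMonoid (fun i => gcoef q k n i * v i) (Nat.max k n - Nat.min k n) (k + n)).
Proof. unfold Tshift. rewrite <- sum_n_m_RtoC. apply sum_n_m_ext. intros. symmetry. apply RtoC_mult. Qed.

Lemma Tshift_sum_y k n j c :
  @sum_n_m R_AbelianMonoid (fun i => gcoef q k n i * (c * y i j)) (Nat.max k n - Nat.min k n) (k + n)
  = c * (y k j * y n j).
Proof.
  rewrite sum_n_m_vanishing_prefix by (first [lia | intros i Hi;
    rewrite (lin_coeff_vanish k n _ i (gcoef_spec k n)); [ring|lia]]).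
  rewrite (sum_eq _ (fun i => c * (gcoef q k n i * Rleg q i (1 - q ^ j)))) by (intros; rewrite y_Rleg; ring).
  rewrite sum_f_R0_scal_l, !y_Rleg. destruct (gcoef_spec k n) as [_ <-]. reflexivity.
Qed.

Definition char_norm (j : nat) : R := Series (fun k => hw q k * y k j ^ 2).

Lemma char_norm_spec j : ex_series (fun k => hw q k * y k j ^ 2) /\ 1 <= char_norm j.
Proof.
  assert (Hp : forall k, 0 <= hw q k * y k j ^ 2)
    by (intros k; apply Rmult_le_pos; [left; apply hw_gt0|apply pow2_ge_0]).
  destruct (Series_le_of_partial_sums _ (/ w j) Hp (bessel_y j)) as [Hex _].
  split; auto. eapply Rle_trans; [|apply (term_le_Series _ 0); auto].
  cbv beta. rewrite hw0, y0. lra.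
Qed.

(* The character of l^1(h) at the mass point 1 - q^j, normalised to be idempotent. *)
Definition char_idem (j : nat) : nat -> C := fun n => RtoC (y n j / char_norm j).

Lemma char_idem_idempotent j : idempotent q (char_idem j).
Proof.
  destruct (char_norm_spec j) as [Hex HS]. split.
  - unfold in_l1, char_idem.
    eapply ex_series_ext; [|apply (ex_series_scal_r (/ char_norm j) _ (ex_series_y_hw j))].
    intros n. simpl. rewrite Cmod_R. unfold Rdiv.
    rewrite Rabs_mult, (Rabs_right (/ char_norm j)) by (apply Rle_ge; left; apply Rinv_0_lt_compat; lra).
    ring.
  - intros n. unfold conv.
    rewrite (CSeries_ext _ (fun k => RtoC (y n j / char_norm j ^ 2 * (hw q k * y k j ^ 2)))).
    + rewrite CSeries_RtoC, Series_scal_l. fold (char_norm j). unfold char_idem. f_equal. field. lra.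
    + intros k. unfold char_idem. rewrite Tshift_RtoC.
      rewrite (sum_n_m_ext _ (fun i => gcoef q k n i * (/ char_norm j * y i j)))
        by (intros i; cbn; unfold Rdiv; ring).
      rewrite Tshift_sum_y, <- !RtoC_mult. f_equal. field. lra.
Qed.

Definition delta (m : nat) : nat -> C := fun n => RtoC (if Nat.eq_dec n m then 1 else 0).

Lemma delta0_idempotent : idempotent q (delta 0).
Proof.
  split.
  - apply ex_series_single. intros k Hk. unfold delta.
    destruct (Nat.eq_dec k 0); [lia|]. rewrite Cmod_R, Rabs_R0. ring.
  - intros n. unfold conv.
    rewrite (CSeries_ext _ (fun k => RtoC (@sum_n_m R_AbelianMonoid
      (fun i => gcoef q k n i * (if Nat.eq_dec i 0 then 1 else 0)) (Nat.max k n - Nat.min k n) (k + n)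
      * (if Nat.eq_dec k 0 then 1 else 0) * hw q k)))
      by (intros k; unfold delta; rewrite Tshift_RtoC, <- !RtoC_mult; reflexivity).
    rewrite CSeries_RtoC, Series_single; [simpl|intros k Hk; destruct (Nat.eq_dec k 0); [lia|ring]].
    rewrite hw0, Nat.sub_0_r, sum_n_n, gcoef_0nn. unfold delta. f_equal. ring.
Qed.

(** * Approximation of the point masses *)

Definition tail_term (n j : nat) : R := q ^ j * (Rabs (y n (S j)) + Rabs (y n j)).
Definition tail_sum (J n : nat) : R := Series (fun i => tail_term n (i + J)).

Lemma tail_term_ge0 n j : 0 <= tail_term n j.
Proof.
  apply Rmult_le_pos; [apply pow_le; lra|].
  pose proof (Rabs_pos (y n (S j))). pose proof (Rabs_pos (y n j)). lra.
Qed.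

Lemma tail_term_le n j : tail_term n j <= 2 * Pleg_bnd n * q ^ j.
Proof.
  unfold tail_term. pose proof (y_bound n (S j)). pose proof (y_bound n j). pose proof (qpow_gt0 j). nra.
Qed.

Lemma ex_series_tail_term J n : ex_series (fun i => tail_term n (i + J)).
Proof.
  apply (ex_series_geom_bound q _ (2 * Pleg_bnd n * q ^ J)); [lra|].
  intros i. rewrite Rabs_right by (apply Rle_ge, tail_term_ge0).
  eapply Rle_trans; [apply tail_term_le|]. rewrite pow_add. right; ring.
Qed.

Lemma tail_term_le_tail_sum J n : tail_term n J <= tail_sum J n.
Proof.
  apply (term_le_Series (fun i => tail_term n (i + J)) 0);
    [apply ex_series_tail_term|intros; apply tail_term_ge0].
Qed.

Definition sq : R := sqrt q.

Lemma sq_spec : 0 < sq /\ sq < 1 /\ sq * sq = q /\ q <= sq.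
Proof.
  unfold sq. pose proof (sqrt_lt_R0 q hq0). pose proof (sqrt_sqrt q ltac:(lra)).
  repeat split; auto; nra.
Qed.

Definition K_tail : R := K_amgm * (1 + / sq) / sqrt (1 - q).

Lemma K_tail_gt0 : 0 < K_tail.
Proof.
  destruct sq_spec as [H1 _]. pose proof K_amgm_gt0. pose proof (sqrt_lt_R0 (1 - q) ltac:(lra)).
  pose proof (Rinv_0_lt_compat sq H1). apply Rdiv_lt_0_compat; nra.
Qed.

Lemma qpow_div_sqrt_w j : q ^ j / sqrt (w j) = sq ^ j / sqrt (1 - q).
Proof.
  destruct sq_spec as [H1 [H2 [H3 H4]]].
  unfold w. rewrite sqrt_mult, sqrt_pow by (lra || apply pow_le; lra). fold sq.
  pose proof (sqrt_lt_R0 (1 - q) ltac:(lra)). pose proof (pow_lt sq j H1).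
  replace (q ^ j) with (sq ^ j * sq ^ j) by (rewrite <- Rpow_mult_distr, H3; reflexivity).
  field. neq_nra.
Qed.

Lemma sum_hw_lam_tail_term_le j M : sum_f_R0 (fun n => hw_lam n * tail_term n j) M <= K_tail * sq ^ j.
Proof.
  destruct sq_spec as [H1 [H2 [H3 H4]]].
  replace (sum_f_R0 (fun n => hw_lam n * tail_term n j) M) with (q ^ j *
    (sum_f_R0 (fun n => hw_lam n * Rabs (y n (S j))) M + sum_f_R0 (fun n => hw_lam n * Rabs (y n j)) M))
    by (rewrite <- plus_sum, <- sum_f_R0_scal_l; apply sum_eq; intros; unfold tail_term; ring).
  pose proof (sum_hw_lam_y_le (S j) M). pose proof (sum_hw_lam_y_le j M). pose proof (qpow_gt0 j).
  apply (Rle_trans _ (q ^ j * (K_amgm / sqrt (w (S j)) + K_amgm / sqrt (w j))));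
    [apply Rmult_le_compat_l; lra|].
  replace (q ^ j * (K_amgm / sqrt (w (S j)) + K_amgm / sqrt (w j)))
    with (K_amgm / q * (q ^ S j / sqrt (w (S j))) + K_amgm * (q ^ j / sqrt (w j)))
    by (pose proof (sqrt_lt_R0 _ (w_gt0 j)); pose proof (sqrt_lt_R0 _ (w_gt0 (S j)));
        simpl; field; neq_nra).
  rewrite !qpow_div_sqrt_w. unfold K_tail. pose proof (sqrt_lt_R0 (1 - q) ltac:(lra)).
  replace (K_amgm / q) with (K_amgm / (sq * sq)) by (rewrite H3; reflexivity).
  right. simpl. field. neq_nra.
Qed.

Lemma sum_hw_lam_tail_sum_le J M :
  sum_f_R0 (fun n => hw_lam n * tail_sum J n) M <= K_tail * sq ^ J / (1 - sq).
Proof.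
  destruct sq_spec as [H1 [H2 _]].
  destruct (Series_sum_f_R0 (fun n i => hw_lam n * tail_term n (i + J)) M) as [Hex HS].
  { intros n. apply (ex_series_scal_l (hw_lam n) (fun i => tail_term n (i + J))), ex_series_tail_term. }
  rewrite (sum_eq _ (fun n => Series (fun i => hw_lam n * tail_term n (i + J))))
    by (intros; unfold tail_sum; rewrite Series_scal_l; reflexivity).
  rewrite <- HS.
  apply (Rle_trans _ (Series (fun i => K_tail * sq ^ J * sq ^ i))).
  - apply Series_le.
    + intros i. split.
      * apply cond_pos_sum. intros [|n]; [simpl; lra|]. apply Rmult_le_pos; [|apply tail_term_ge0].
        destruct (hw_lam_bounds (S n) ltac:(lia)) as [Hl _].
        apply Rlt_le, Rdiv_lt_0_compat; [apply hw_gt0|auto].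
      * eapply Rle_trans; [apply sum_hw_lam_tail_term_le|]. rewrite pow_add. right; ring.
    + apply (ex_series_scal_l (K_tail * sq ^ J) (fun i => sq ^ i)), ex_series_geom.
      rewrite Rabs_right; lra.
  - rewrite Series_scal_l, Series_geom by (rewrite Rabs_right; lra). right. field. lra.
Qed.

Section PointMass.
Variable m : nat.

(* Orthogonality gives h(m) sum_j w_j y_m(j) y_n(j) = delta_m(n); subtracting the term of R_0 = 1
   makes the coefficients O(q^j), which the tail estimates need. *)
Definition phi (j : nat) : R := hw q m * (y m j - 1).
Definition C_phi : R := hw q m * Pleg_lip m.

Lemma C_phi_ge0 : 0 <= C_phi.
Proof. apply Rmult_le_pos; [left; apply hw_gt0|apply Pleg_lip_ge0]. Qed.

Lemma phi_bound j : Rabs (phi j) <= C_phi * q ^ j.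
Proof.
  unfold phi, C_phi. pose proof (hw_gt0 m). rewrite Rabs_mult, Rabs_right, Rmult_assoc by lra.
  apply Rmult_le_compat_l; [lra|apply y_at0].
Qed.

Lemma phi_diff j : Rabs (phi (S j) - phi j) <= C_phi * q ^ j.
Proof.
  unfold phi, C_phi. pose proof (hw_gt0 m).
  replace (hw q m * (y m (S j) - 1) - hw q m * (y m j - 1)) with (hw q m * (y m (S j) - y m j)) by ring.
  rewrite Rabs_mult, Rabs_right, Rmult_assoc by lra. apply Rmult_le_compat_l; [lra|apply y_diff].
Qed.

Definition approx_sum (n J : nat) : R := sum_f_R0 (fun j => w j * phi j * y n j) J.

Lemma ex_series_w_phi_y n : ex_series (fun j => w j * phi j * y n j).
Proof.
  eapply ex_series_ext;
    [|apply (ex_series_lin2 (hw q m) (- hw q m) _ _ (ex_series_wyy m n) (ex_series_wyy 0 n))].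
  intros j. simpl. unfold phi. rewrite y0. ring.
Qed.

Lemma Series_w_phi_y n : (1 <= m)%nat -> Series (fun j => w j * phi j * y n j) =
  (if Nat.eq_dec n m then 1 else 0) - hw q m * (if Nat.eq_dec n 0 then 1 else 0).
Proof.
  intros Hm.
  rewrite (Series_ext _ (fun j => hw q m * (w j * y m j * y n j) + (- hw q m) * (w j * y 0 j * y n j)))
    by (intros j; unfold phi; rewrite y0; ring).
  rewrite Series_lin2 by apply ex_series_wyy. fold (ip m n) (ip 0 n). rewrite !ip_E.
  pose proof (hw_gt0 m).
  destruct (Nat.eq_dec m n), (Nat.eq_dec n m), (Nat.eq_dec 0 n), (Nat.eq_dec n 0); subst; try lia;
    first [ring | field; lra | rewrite hw0; field; lra].
Qed.

Lemma lam_approx_sum_diff n J k :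
  Rabs (lam n * (approx_sum n (k + J) - approx_sum n J)) <= C_phi * (tail_term n (k + J) + 2 * tail_sum J n).
Proof.
  set (g := fun j => flux n j * (phi (S j) - phi j)).
  unfold approx_sum. rewrite Rmult_minus_distr_l, !lam_sum_by_parts. fold g.
  replace ((1 - q) * (phi (k + J) * flux n (k + J) - psum g (k + J))
           - (1 - q) * (phi J * flux n J - psum g J))
    with ((1 - q) * (phi (k + J) * flux n (k + J) - phi J * flux n J - (psum g (k + J) - psum g J))) by ring.
  rewrite psum_shift, Rabs_mult, (Rabs_right (1 - q)) by lra.
  assert (Hb : forall j, Rabs (phi j * flux n j) <= C_phi * tail_term n j).
  { intros j. unfold tail_term. rewrite Rabs_mult, <- Rmult_assoc.
    pose proof (phi_bound j). pose proof (flux_bound_abs n j).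
    apply Rmult_le_compat; auto using Rabs_pos. }
  assert (Hg : Rabs (psum (fun i => g (i + J)%nat) k) <= C_phi * tail_sum J n).
  { eapply Rle_trans; [apply psum_abs|].
    apply (Rle_trans _ (psum (fun i => C_phi * tail_term n (i + J)) k)).
    - apply psum_le. intros i. unfold g, tail_term. rewrite Rabs_mult, Rmult_comm, <- Rmult_assoc.
      pose proof (phi_diff (i + J)). pose proof (flux_bound_abs n (i + J)).
      apply Rmult_le_compat; auto using Rabs_pos.
    - rewrite psum_scal_l. apply Rmult_le_compat_l; [apply C_phi_ge0|].
      apply psum_le_Series; [apply ex_series_tail_term|intros; apply tail_term_ge0]. }
  pose proof (Hb (k + J)%nat). pose proof (Hb J). pose proof C_phi_ge0.
  pose proof (tail_term_le_tail_sum J n).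
  apply (Rle_trans _ (1 * (C_phi * tail_term n (k + J) + C_phi * tail_term n J + C_phi * tail_sum J n)));
    [|nra].
  apply Rmult_le_compat; try lra; [apply Rabs_pos|].
  eapply Rle_trans; [apply Rabs_sub_le|]. apply Rplus_le_compat; auto.
  eapply Rle_trans; [apply Rabs_sub_le|]. lra.
Qed.

Definition approx_err (J n : nat) : R := Series (fun j => w j * phi j * y n j) - approx_sum n J.

Lemma lam_approx_err_bound n J : Rabs (lam n * approx_err J n) <= 2 * C_phi * tail_sum J n.
Proof.
  set (S := Series (fun j => w j * phi j * y n j)).
  assert (H1 : is_lim_seq (fun k => approx_sum n (k + J)) S)
    by (apply (is_lim_seq_incr_n (fun K => approx_sum n K) J S), is_lim_seq_partial_sums, ex_series_w_phi_y).
  assert (H2 : is_lim_seq (fun k => Rabs (lam n * (approx_sum n (k + J) - approx_sum n J)))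
                          (Rabs (lam n * (S - approx_sum n J)))).
  { apply (is_lim_seq_abs _ (lam n * (S - approx_sum n J))),
      (is_lim_seq_scal_l _ (lam n) (S - approx_sum n J)).
    apply is_lim_seq_minus'; [auto|apply is_lim_seq_const]. }
  assert (H3 : is_lim_seq (fun k => C_phi * (2 * Pleg_bnd n * q ^ k + 2 * tail_sum J n))
                          (C_phi * (2 * Pleg_bnd n * 0 + 2 * tail_sum J n))).
  { apply (is_lim_seq_scal_l _ C_phi (2 * Pleg_bnd n * 0 + 2 * tail_sum J n)).
    apply is_lim_seq_plus'; [|apply is_lim_seq_const].
    apply (is_lim_seq_scal_l _ (2 * Pleg_bnd n) 0), is_lim_seq_geom. rewrite Rabs_right; lra. }
  assert (H4 : forall k, Rabs (lam n * (approx_sum n (k + J) - approx_sum n J))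
                         <= C_phi * (2 * Pleg_bnd n * q ^ k + 2 * tail_sum J n)).
  { intros k. eapply Rle_trans; [apply lam_approx_sum_diff|].
    apply Rmult_le_compat_l; [apply C_phi_ge0|]. apply Rplus_le_compat_r.
    eapply Rle_trans; [apply tail_term_le|]. rewrite pow_add.
    pose proof (qpow_le1 J). pose proof (qpow_gt0 k). pose proof (qpow_gt0 J). pose proof (Pleg_bnd_ge0 n).
    assert (q ^ k * q ^ J <= q ^ k) by nra. nra. }
  pose proof (is_lim_seq_le _ _ _ _ H4 H2 H3) as H. simpl in H.
  replace (2 * C_phi * tail_sum J n) with (C_phi * (2 * Pleg_bnd n * 0 + 2 * tail_sum J n)) by ring.
  exact H.
Qed.

Lemma approx_err0_bound J : Rabs (approx_err J 0) <= C_phi * q ^ S J / (1 - q).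
Proof.
  set (a := fun j => w j * phi j * y 0 j).
  assert (Ha : forall j, Rabs (a (S J + j)%nat) <= C_phi * q ^ S J * q ^ j).
  { intros j. rewrite Rmult_assoc, <- pow_add. set (k := (S J + j)%nat).
    unfold a, w. rewrite y0, Rmult_1_r, Rabs_mult.
    rewrite Rabs_right by (apply Rle_ge, Rmult_le_pos; [lra|apply pow_le; lra]).
    pose proof (phi_bound k). pose proof (qpow_gt0 k). pose proof (qpow_le1 k).
    pose proof (Rabs_pos (phi k)). assert ((1 - q) * q ^ k <= 1) by nra. nra. }
  assert (Hex : ex_series (fun k => Rabs (a (S J + k)%nat)))
    by (apply (ex_series_geom_bound q _ (C_phi * q ^ S J)); [lra|intros k; rewrite Rabs_Rabsolu; apply Ha]).
  unfold approx_err, approx_sum. fold a.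
  rewrite (Series_incr_n a (S J)) by (apply ex_series_w_phi_y || lia). simpl pred.
  replace (sum_f_R0 a J + Series (fun k => a (S J + k)%nat) - sum_f_R0 a J)
    with (Series (fun k => a (S J + k)%nat)) by ring.
  eapply Rle_trans; [apply Series_Rabs; auto|].
  apply (Rle_trans _ (Series (fun k => C_phi * q ^ S J * q ^ k))).
  - apply Series_le; [intros k; split; [apply Rabs_pos|apply Ha]|].
    apply (ex_series_scal_l (C_phi * q ^ S J) (fun k => q ^ k)), ex_series_geom. rewrite Rabs_right; lra.
  - rewrite Series_scal_l, Series_geom by (rewrite Rabs_right; lra). right. field. lra.
Qed.

Lemma approx_err_hw_le J n : Rabs (approx_err J n) * hw q n <=
  (if Nat.eq_dec n 0 then Rabs (approx_err J 0) else 0) + 2 * C_phi * (hw_lam n * tail_sum J n).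
Proof.
  destruct n as [|n].
  { rewrite hw0. cbn [hw_lam]. destruct (Nat.eq_dec 0 0); [|lia]. rewrite Rmult_0_l. lra. }
  destruct (Nat.eq_dec (S n) 0); [lia|].
  destruct (hw_lam_bounds (S n) ltac:(lia)) as [Hl _]. pose proof (hw_gt0 (S n)).
  pose proof (lam_approx_err_bound (S n) J) as Hb.
  rewrite Rabs_mult, (Rabs_right (lam (S n))) in Hb by lra. unfold hw_lam.
  replace (Rabs (approx_err J (S n)) * hw q (S n))
    with (hw q (S n) / lam (S n) * (lam (S n) * Rabs (approx_err J (S n)))) by (field; lra).
  apply (Rle_trans _ (hw q (S n) / lam (S n) * (2 * C_phi * tail_sum J (S n)))); [|right; ring].
  apply Rmult_le_compat_l; auto. left; apply Rdiv_lt_0_compat; lra.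
Qed.

Definition K_err : R := C_phi / (1 - q) + 2 * C_phi * K_tail / (1 - sq).

Lemma K_err_ge0 : 0 <= K_err.
Proof.
  destruct sq_spec as [H1 [H2 _]]. pose proof C_phi_ge0. pose proof K_tail_gt0.
  assert (0 <= C_phi / (1 - q)) by (apply Rdiv_le_0_compat; lra).
  assert (0 <= 2 * C_phi * K_tail / (1 - sq)) by (apply Rdiv_le_0_compat; [apply Rmult_le_pos|]; lra).
  unfold K_err. lra.
Qed.

Lemma sum_approx_err_hw_le J M : sum_f_R0 (fun n => Rabs (approx_err J n) * hw q n) M <= K_err * sq ^ J.
Proof.
  destruct sq_spec as [H1 [H2 [H3 H4]]].
  apply (Rle_trans _ (sum_f_R0 (fun n => (if Nat.eq_dec n 0 then Rabs (approx_err J 0) else 0)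
    + 2 * C_phi * (hw_lam n * tail_sum J n)) M)); [apply sum_Rle; intros; apply approx_err_hw_le|].
  rewrite plus_sum, sum_f_R0_scal_l, (sum_f_R0_single _ _ 0)
    by (intros k Hk; destruct (Nat.eq_dec k 0); [lia|auto]).
  destruct (Compare_dec.le_dec 0 M); [|lia]. simpl.
  pose proof (approx_err0_bound J). pose proof (sum_hw_lam_tail_sum_le J M). pose proof C_phi_ge0.
  assert (q ^ S J <= sq ^ J).
  { assert (q ^ J <= sq ^ J) by (apply pow_incr; lra). pose proof (qpow_gt0 J). simpl. nra. }
  apply (Rle_trans _ (C_phi * sq ^ J / (1 - q) + 2 * C_phi * (K_tail * sq ^ J / (1 - sq))));
    [|right; unfold K_err; field; neq_nra].
  apply Rplus_le_compat; [|apply Rmult_le_compat_l; nra].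
  eapply Rle_trans; [eassumption|]. unfold Rdiv.
  apply Rmult_le_compat_r; [left; apply Rinv_0_lt_compat; lra|apply Rmult_le_compat_l; auto].
Qed.

Fixpoint approx_list (J : nat) : list (C * (nat -> C)) :=
  let term := (RtoC (w J * phi J * char_norm J), char_idem J) in
  match J with O => term :: nil | S J' => term :: approx_list J' end.

Lemma lincomb_approx_list J n : lincomb (approx_list J) n = RtoC (approx_sum n J).
Proof.
  assert (Hterm : forall j, Cmult (RtoC (w j * phi j * char_norm j)) (char_idem j n)
                            = RtoC (w j * phi j * y n j)).
  { intros j. unfold char_idem. rewrite <- RtoC_mult. f_equal.
    destruct (char_norm_spec j) as [_ HS]. field. lra. }
  unfold approx_sum. induction J as [|J IH]; simpl; rewrite Hterm.
  - unfold RtoC, Cplus. apply injective_projections; simpl; ring.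
  - rewrite IH, RtoC_plus. ring.
Qed.

Lemma approx_list_idempotent J : List.Forall (fun p => idempotent q (snd p)) (approx_list J).
Proof. induction J; simpl; constructor; auto; apply char_idem_idempotent. Qed.

End PointMass.

(** * Density *)

Lemma l1_ext f g : (forall n, f n = g n) -> (in_l1 q f -> in_l1 q g) /\ l1norm q f = l1norm q g.
Proof.
  intros H. split.
  - apply ex_series_ext. intros; rewrite H; auto.
  - apply Series_ext. intros; rewrite H; auto.
Qed.

Lemma l1norm_ge0 f : in_l1 q f -> 0 <= l1norm q f.
Proof.
  intros H. apply Series_nonneg; auto. intros n. pose proof (hw_gt0 n). pose proof (Cmod_ge_0 (f n)). nra.
Qed.

Lemma l1_plus f g : in_l1 q f -> in_l1 q g ->
  in_l1 q (fun n => Cplus (f n) (g n)) /\ l1norm q (fun n => Cplus (f n) (g n)) <= l1norm q f + l1norm q g.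
Proof.
  intros Hf Hg.
  assert (Hs : ex_series (fun n => Cmod (f n) * hw q n + Cmod (g n) * hw q n))
    by (apply (ex_series_plus (fun n => Cmod (f n) * hw q n) (fun n => Cmod (g n) * hw q n)); auto).
  assert (Hb : forall n, 0 <= Cmod (Cplus (f n) (g n)) * hw q n <= Cmod (f n) * hw q n + Cmod (g n) * hw q n).
  { intros n. pose proof (hw_gt0 n). pose proof (Cmod_triangle (f n) (g n)).
    pose proof (Cmod_ge_0 (Cplus (f n) (g n))). split; nra. }
  assert (He : in_l1 q (fun n => Cplus (f n) (g n))).
  { apply (ex_series_le (fun n => Cmod (Cplus (f n) (g n)) * hw q n)
      (fun n => Cmod (f n) * hw q n + Cmod (g n) * hw q n)); auto.
    intros n. change (norm ?x) with (Rabs x). rewrite Rabs_right by (apply Rle_ge, Hb). apply Hb. }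
  split; auto. unfold l1norm. rewrite <- Series_plus by auto. apply Series_le; auto.
Qed.

Lemma l1_scal c f : in_l1 q f ->
  in_l1 q (fun n => Cmult c (f n)) /\ l1norm q (fun n => Cmult c (f n)) = Cmod c * l1norm q f.
Proof.
  intros Hf. split.
  - apply (ex_series_ext (fun n => Cmod c * (Cmod (f n) * hw q n)));
      [|apply (ex_series_scal_l (Cmod c) _ Hf)].
    intros n. rewrite Cmod_mult. simpl. ring.
  - unfold l1norm. rewrite <- Series_scal_l. apply Series_ext. intros. rewrite Cmod_mult. ring.
Qed.

Definition approximable (f : nat -> C) : Prop := forall eps, 0 < eps -> exists l : list (C * (nat -> C)),
  List.Forall (fun p => idempotent q (snd p)) l /\
  in_l1 q (fun n => Cminus (f n) (lincomb l n)) /\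
  l1norm q (fun n => Cminus (f n) (lincomb l n)) < eps.

Lemma approximable_ext f g : (forall n, f n = g n) -> approximable f -> approximable g.
Proof.
  intros H Hf eps Heps. destruct (Hf eps Heps) as [l [H1 [H2 H3]]]. exists l.
  destruct (l1_ext (fun n => Cminus (f n) (lincomb l n)) (fun n => Cminus (g n) (lincomb l n)))
    as [E1 E2]; [intros; rewrite H; auto|].
  rewrite <- E2. auto.
Qed.

Lemma approximable_plus f g : approximable f -> approximable g -> approximable (fun n => Cplus (f n) (g n)).
Proof.
  intros Hf Hg eps Heps.
  destruct (Hf (eps / 2) ltac:(lra)) as [l1 [A1 [B1 C1]]].
  destruct (Hg (eps / 2) ltac:(lra)) as [l2 [A2 [B2 C2]]].
  exists (l1 ++ l2). split; [apply Forall_app; auto|].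
  destruct (l1_plus _ _ B1 B2) as [D1 D2].
  destruct (l1_ext (fun n => Cplus (Cminus (f n) (lincomb l1 n)) (Cminus (g n) (lincomb l2 n)))
    (fun n => Cminus (Cplus (f n) (g n)) (lincomb (l1 ++ l2) n))) as [E1 E2];
    [intros n; rewrite lincomb_app; ring|].
  split; auto. rewrite <- E2. lra.
Qed.

Lemma approximable_scal c f : approximable f -> approximable (fun n => Cmult c (f n)).
Proof.
  intros Hf eps Heps. pose proof (Cmod_ge_0 c).
  destruct (Hf (eps / (Cmod c + 1))) as [l [A [B Hl]]]; [apply Rdiv_lt_0_compat; lra|].
  exists (map (fun p => (Cmult c (fst p), snd p)) l). split; [apply Forall_map; exact A|].
  destruct (l1_scal c _ B) as [D1 D2].
  destruct (l1_ext (fun n => Cmult c (Cminus (f n) (lincomb l n)))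
    (fun n => Cminus (Cmult c (f n)) (lincomb (map (fun p => (Cmult c (fst p), snd p)) l) n))) as [E1 E2];
    [intros n; rewrite lincomb_scal; ring|].
  split; auto. rewrite <- E2, D2. pose proof (l1norm_ge0 _ B).
  apply (Rle_lt_trans _ (Cmod c * (eps / (Cmod c + 1)))); [apply Rmult_le_compat_l; lra|].
  apply (Rmult_lt_reg_r (Cmod c + 1)); [lra|]. field_simplify; [nra|lra].
Qed.

Lemma approximable_delta0 : approximable (delta 0).
Proof.
  intros eps Heps. exists ((RtoC 1, delta 0) :: nil).
  split; [constructor; [apply delta0_idempotent|constructor]|].
  assert (Hz : forall n, Cminus (delta 0 n) (lincomb ((RtoC 1, delta 0) :: nil) n) = RtoC 0).
  { intros n. unfold delta. simpl. unfold RtoC, Cminus, Cplus, Cmult, Copp. simpl.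
    apply injective_projections; simpl; ring. }
  assert (Hnorm : forall n, Cmod (RtoC 0) * hw q n = 0) by (intros; rewrite Cmod_R, Rabs_R0; ring).
  destruct (l1_ext (fun _ => RtoC 0) _ (fun n => eq_sym (Hz n))) as [E1 E2].
  split; [apply E1, ex_series_single; auto|].
  rewrite <- E2. unfold l1norm. rewrite (Series_ext _ _ Hnorm), Series_zero. lra.
Qed.

Lemma approximable_delta m : approximable (delta m).
Proof.
  destruct m as [|m]; [apply approximable_delta0|].
  intros eps Heps. pose proof (K_err_ge0 (S m)). destruct sq_spec as [H1 [H2 _]].
  destruct (pow_lt_1_zero sq ltac:(rewrite Rabs_right; lra) (eps / (K_err (S m) + 1))
    ltac:(apply Rdiv_lt_0_compat; lra)) as [J HJ].
  specialize (HJ J (le_n J)). rewrite Rabs_right in HJ by (apply Rle_ge, pow_le; lra).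
  exists ((RtoC (hw q (S m)), delta 0) :: approx_list (S m) J).
  split; [constructor; [apply delta0_idempotent|apply approx_list_idempotent]|].
  destruct (l1_ext (fun n => RtoC (approx_err (S m) J n))
    (fun n => Cminus (delta (S m) n) (lincomb ((RtoC (hw q (S m)), delta 0) :: approx_list (S m) J) n)))
    as [E1 E2].
  { intros n. simpl. rewrite lincomb_approx_list. unfold approx_err. rewrite Series_w_phi_y by lia.
    unfold delta. rewrite <- RtoC_mult, <- RtoC_plus, <- RtoC_minus. f_equal. ring. }
  assert (Hp : forall n, 0 <= Rabs (approx_err (S m) J n) * hw q n)
    by (intros n; apply Rmult_le_pos; [apply Rabs_pos|left; apply hw_gt0]).
  assert (Hnorm : forall n,
    Cmod (RtoC (approx_err (S m) J n)) * hw q n = Rabs (approx_err (S m) J n) * hw q n)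
    by (intros; rewrite Cmod_R; auto).
  destruct (Series_le_of_partial_sums _ _ Hp (sum_approx_err_hw_le (S m) J)) as [Hex Hle].
  split; [apply E1, (ex_series_ext _ _ (fun n => eq_sym (Hnorm n)) Hex)|].
  rewrite <- E2. unfold l1norm. rewrite (Series_ext _ _ Hnorm).
  eapply Rle_lt_trans; [exact Hle|].
  apply (Rle_lt_trans _ (K_err (S m) * (eps / (K_err (S m) + 1)))); [apply Rmult_le_compat_l; lra|].
  apply (Rmult_lt_reg_r (K_err (S m) + 1)); [lra|]. field_simplify; [nra|lra].
Qed.

Definition trunc (f : nat -> C) (M : nat) : nat -> C :=
  fun n => if Compare_dec.le_dec n M then f n else RtoC 0.

Lemma approximable_trunc f M : approximable (trunc f M).
Proof.
  induction M as [|M IH].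
  - apply (approximable_ext (fun n => Cmult (f 0%nat) (delta 0 n)));
      [|apply approximable_scal, approximable_delta].
    intros n. unfold trunc, delta.
    destruct (Compare_dec.le_dec n 0), (Nat.eq_dec n 0); try lia; [subst|];
      unfold RtoC, Cmult; apply injective_projections; simpl; ring.
  - apply (approximable_ext (fun n => Cplus (trunc f M n) (Cmult (f (S M)) (delta (S M) n))));
      [|apply approximable_plus, approximable_scal, approximable_delta; auto].
    intros n. unfold trunc, delta.
    destruct (Compare_dec.le_dec n M), (Compare_dec.le_dec n (S M)), (Nat.eq_dec n (S M)); try lia;
      try subst; unfold RtoC, Cmult, Cplus; simpl; apply injective_projections; simpl; ring.
Qed.

Lemma l1_tail_small f eps : in_l1 q f -> 0 < eps -> exists M,
  let g := fun n => if Compare_dec.le_dec n M then RtoC 0 else f n in in_l1 q g /\ l1norm q g < eps.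
Proof.
  intros Hf Heps. set (a := fun n => Cmod (f n) * hw q n).
  assert (Hapos : forall n, 0 <= a n)
    by (intros n; pose proof (hw_gt0 n); pose proof (Cmod_ge_0 (f n)); unfold a; nra).
  pose proof (is_lim_seq_partial_sums a Hf) as Hlim. apply is_lim_seq_spec in Hlim.
  destruct (Hlim (mkposreal eps Heps)) as [M HM]. specialize (HM M (le_n M)). simpl in HM.
  exists M. intros g.
  set (b := fun n => if Compare_dec.le_dec n M then 0 else a n).
  assert (Hgb : forall n, Cmod (g n) * hw q n = b n)
    by (intros n; unfold g, b;
        destruct (Compare_dec.le_dec n M); [rewrite Cmod_R, Rabs_R0; ring|reflexivity]).
  assert (Hb : ex_series b).
  { apply (ex_series_le b a); auto. intros n. change (norm (b n)) with (Rabs (b n)). unfold b.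
    destruct (Compare_dec.le_dec n M); [rewrite Rabs_R0; auto|rewrite Rabs_right; [lra|apply Rle_ge; auto]]. }
  split; [apply (ex_series_ext b); [intros; rewrite Hgb|]; auto|].
  unfold l1norm. rewrite (Series_ext _ b), (Series_incr_n b (S M)) by (auto; lia). simpl pred.
  rewrite sum_f_R0_eq0 by (intros k Hk; unfold b; destruct (Compare_dec.le_dec k M); [auto|lia]).
  rewrite (Series_ext _ (fun k => a (S M + k)%nat))
    by (intros k; unfold b; destruct (Compare_dec.le_dec (S M + k) M); [lia|auto]).
  rewrite (Series_incr_n a (S M)) in HM by (auto; lia). simpl pred in HM.
  assert (0 <= Series (fun k => a (S M + k)%nat))
    by (apply Series_nonneg; [apply (ex_series_incr_n a (S M)); auto|intros; apply Hapos]).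
  rewrite Rabs_left1 in HM by lra. lra.
Qed.

Lemma approximable_l1 f : in_l1 q f -> approximable f.
Proof.
  intros Hf eps Heps.
  destruct (l1_tail_small f (eps / 2) Hf ltac:(lra)) as [M [Hg Hgn]].
  destruct (approximable_trunc f M (eps / 2) ltac:(lra)) as [l [A1 [A2 A3]]].
  exists l. split; auto.
  destruct (l1_plus _ _ Hg A2) as [B1 B2].
  destruct (l1_ext (fun n => Cplus (if Compare_dec.le_dec n M then RtoC 0 else f n)
    (Cminus (trunc f M n) (lincomb l n))) (fun n => Cminus (f n) (lincomb l n))) as [E1 E2].
  { intros n. unfold trunc. destruct (Compare_dec.le_dec n M);
      apply injective_projections; unfold Cminus, Cplus, Copp, RtoC; simpl; ring. }
  split; auto. rewrite <- E2. lra.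
Qed.

End LittleQLegendre.

Theorem theorem3p1 (q : R) (hq0 : 0 < q) (hq1 : q < 1) :
  forall f : nat -> C, in_l1 q f ->
  forall eps : R, 0 < eps ->
  exists l : list (C * (nat -> C)),
    List.Forall (fun p => idempotent q (snd p)) l /\
    l1norm q (fun n => Cminus (f n) (lincomb l n)) < eps.
Proof.
  intros f Hf eps Heps.
  destruct (approximable_l1 q hq0 hq1 f Hf eps Heps) as [l [Hidem [_ Hlt]]].
  exists l. split; assumption.
Qed.
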